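(* Let $\Phi=(\phi_1,\dots,\phi_6)$ be an admissible datum, let $\Phi^a=\sum_{j=1}^6(-1)^j\phi_j$, let $\psi_a$ be the solution of $\Delta\psi_a=0$ in $D$, $\psi_a=\Phi^a$ on $\partial D$, and let $p\in D$. Then the conditions \[\int_{\partial D}\Phi^a\Big(\frac{\zeta+p}{\overline p\,\zeta+1}\Big)ds_\zeta=0,\quad \int_{\partial D}\Phi^a\Big(\frac{\zeta+p}{\overline p\,\zeta+1}\Big)\zeta_r\,ds_\zeta=0\ (r=1,2),\] \[\int_{\partial D}\Phi^a\Big(\frac{\zeta+p}{\overline p\,\zeta+1}\Big)\zeta_1^2\,ds_\zeta=0,\quad \int_{\partial D}\Phi^a\Big(\frac{\zeta+p}{\overline p\,\zeta+1}\Big)\zeta_1\zeta_2\,ds_\zeta=0\] (with $\zeta=(\zeta_1,\zeta_2)$) hold if and only if $\psi_a(p)=0$, $\nabla\psi_a(p)=(0,0)$ and $H\psi_a(p)=0$, where $H\psi_a=(\partial^2_{x_ix_j}\psi_a)_{i,j=1,2}$ is the Hessian matrix of $\psi_a$.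
   Context: Let $D=\{x\in\mathbb{R}^2:|x|<1\}$ be the open unit disk; points $(x_1,x_2)\in\mathbb{R}^2$ are identified with complex numbers $x_1+ix_2$, $\overline p$ is complex conjugation, and $ds_\zeta$ is arc length on $\partial D$. A $6$-tuple $\Phi=(\phi_1,\dots,\phi_6)$ is an admissible datum if $\phi_i\in W^{1,\infty}(\partial D)$, $\phi_i\ge 0$, $\phi_i\phi_j=0$ a.e. on $\partial D$ for $i\ne j$, each set $\{\phi_i>0\}\subset\partial D$ is a nonempty open connected arc, and $\sum_{i=1}^6\phi_i$ vanishes at exactly $6$ points of $\partial D$ (the endpoints of these arcs). *)

(* Stdlib reals + Coquelicot.  Points of R^2 are Coquelicot complex
   numbers C = R * R; (x1,x2) <-> x1 + i x2. *)
From Stdlib Require Import Reals Lra ZArith.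
From Coquelicot Require Export Coquelicot.
Open Scope R_scope.

Definition on_circle (x : C) : Prop := Cmod x = 1.
Definition in_disk (x : C) : Prop := Cmod x < 1.

Definition circ (t : R) : C := (cos t, sin t).

Definition bint (f : C -> R) : R := RInt (fun t => f (circ t)) 0 (2 * PI).

(* W^{1,oo}(dD) = Lipschitz functions on the circle *)
Definition W1inf_circle (f : C -> R) : Prop :=
  exists L : R, forall x y, on_circle x -> on_circle y ->
    Rabs (f x - f y) <= L * Cmod (x - y).

(* {f > 0} (as a subset of dD) is a nonempty open connected arc:
   the image of an open angular interval (a,b) with 0 < b - a <= 2 PI *)
Definition positivity_set_is_arc (f : C -> R) : Prop :=
  exists a b : R, a < b /\ b <= a + 2 * PI /\
    forall t : R, 0 < f (circ t) <->
      exists k : Z, a < t + 2 * PI * IZR k < b.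

Definition Phi_sum (phi : nat -> C -> R) (x : C) : R :=
  sum_f_R0 (fun k => phi (S k) x) 5.

Definition Phi_a (phi : nat -> C -> R) (x : C) : R :=
  sum_f_R0 (fun k => (-1) ^ (S k) * phi (S k) x) 5.

Definition admissible (phi : nat -> C -> R) : Prop :=
  (forall i, (1 <= i <= 6)%nat -> W1inf_circle (phi i)) /\
  (forall i, (1 <= i <= 6)%nat -> forall x, on_circle x -> 0 <= phi i x) /\
  (forall i j, (1 <= i <= 6)%nat -> (1 <= j <= 6)%nat -> i <> j ->
     forall x, on_circle x -> phi i x * phi j x = 0) /\
  (forall i, (1 <= i <= 6)%nat -> positivity_set_is_arc (phi i)) /\
  (exists l : list C, length l = 6%nat /\ List.NoDup l /\
     forall x, on_circle x -> (Phi_sum phi x = 0 <-> List.In x l)).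

Definition pd1 (f : C -> R) (x : C) : R := Derive (fun s => f (s, snd x)) (fst x).
Definition pd2 (f : C -> R) (x : C) : R := Derive (fun s => f (fst x, s)) (snd x).

Definition ex_d1 (f : C -> R) (x : C) : Prop := ex_derive (fun s => f (s, snd x)) (fst x).
Definition ex_d2 (f : C -> R) (x : C) : Prop := ex_derive (fun s => f (fst x, s)) (snd x).

Definition cont_within (A : C -> Prop) (g : C -> R) (x : C) : Prop :=
  forall eps : R, 0 < eps -> exists delta : R, 0 < delta /\
    forall y, A y -> Cmod (y - x) < delta -> Rabs (g y - g x) < eps.

Definition C2_disk (f : C -> R) : Prop :=
  forall x, in_disk x ->
    ex_d1 f x /\ ex_d2 f x /\
    ex_d1 (pd1 f) x /\ ex_d2 (pd1 f) x /\ ex_d1 (pd2 f) x /\ ex_d2 (pd2 f) x /\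
    cont_within in_disk f x /\
    cont_within in_disk (pd1 f) x /\ cont_within in_disk (pd2 f) x /\
    cont_within in_disk (pd1 (pd1 f)) x /\ cont_within in_disk (pd2 (pd1 f)) x /\
    cont_within in_disk (pd1 (pd2 f)) x /\ cont_within in_disk (pd2 (pd2 f)) x.

Definition dirichlet_solution (g psi : C -> R) : Prop :=
  C2_disk psi /\
  (forall x, in_disk x -> pd1 (pd1 psi) x + pd2 (pd2 psi) x = 0) /\
  (forall x, Cmod x <= 1 -> cont_within (fun y => Cmod y <= 1) psi x) /\
  (forall x, on_circle x -> psi x = g x).

Definition moeb (p zeta : C) : C := (zeta + p) / (Cconj p * zeta + 1).

From Stdlib Require Import Reals Lra ClassicalEpsilon.
From Coquelicot Require Import Coquelicot.
Open Scope R_scope.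

(* The Moebius map m_p(z) = (z + p) / (conj p * z + 1) is a holomorphic automorphism of the
   disk with m_p(0) = p and m_p'(0) = 1 - |p|^2, so F = psi o m_p is harmonic in D,
   continuous on its closure, and equal to Phi^a o m_p on the circle.  In polar coordinates
   each Fourier coefficient I(r) = int F(r, t) w(t) dt of frequency n solves the Euler
   equation r^2 I'' + r I' = n^2 I, hence I(r) = I(1) r^n.  Reading off I, I', I'' at r = 0
   for w = 1, cos t, sin t, cos 2t, sin 2t expresses the boundary integrals through
   2 pi psi(p), pi (1 - |p|^2) grad psi(p) and, once grad psi(p) = 0,
   (pi/4) (1 - |p|^2)^2 (psi_11 - psi_22, psi_12 + psi_21); here z_1^2 = (1 + cos 2t)/2 and
   z_1 z_2 = sin(2t)/2.  As psi_11 + psi_22 = 0 and psi_12 = psi_21, these vanish exactly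
   when psi(p), grad psi(p) and the Hessian do. *)

Lemma continuity_pt_of_2d (f : R -> R -> R) x y :
  continuity_2d_pt f x y -> continuity_pt (f x) y.
Proof.
  intros H eps Heps. destruct (H (mkposreal eps Heps)) as [d Hd].
  exists d. split; [apply cond_pos|]. intros z [_ Hz]. unfold R_dist in *.
  apply (Hd x z); [|exact Hz]. rewrite Rminus_eq_0, Rabs_R0. apply cond_pos.
Qed.

Lemma continuity_2d_pt_snd (w : R -> R) x y :
  continuity_pt w y -> continuity_2d_pt (fun _ v => w v) x y.
Proof.
  intros H. apply (continuity_1d_2d_pt_comp w (fun _ v => v)); [exact H|].
  apply continuity_2d_pt_id2.
Qed.

Lemma continuity_2d_pt_mult_snd (F : R -> R -> R) (w : R -> R) r t :
  continuity_2d_pt F r t -> continuity_pt w t ->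
  continuity_2d_pt (fun u v => F u v * w v) r t.
Proof.
  intros HF Hw. apply (continuity_2d_pt_mult F (fun _ v => w v)); [exact HF|].
  now apply continuity_2d_pt_snd.
Qed.

Lemma continuity_2d_pt_pow (f : R -> R -> R) n x y :
  continuity_2d_pt f x y -> continuity_2d_pt (fun u v => f u v ^ n) x y.
Proof.
  intros H. induction n as [|n IH]; simpl.
  - apply continuity_2d_pt_const.
  - now apply (continuity_2d_pt_mult f (fun u v => f u v ^ n)).
Qed.

Lemma continuity_2d_pt_cos (f : R -> R -> R) x y :
  continuity_2d_pt f x y -> continuity_2d_pt (fun u v => cos (f u v)) x y.
Proof. apply continuity_1d_2d_pt_comp, continuity_cos. Qed.

Lemma continuity_2d_pt_sin (f : R -> R -> R) x y :
  continuity_2d_pt f x y -> continuity_2d_pt (fun u v => sin (f u v)) x y.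
Proof. apply continuity_1d_2d_pt_comp, continuity_sin. Qed.

Ltac continuity_2d :=
  lazymatch goal with
  | |- continuity_2d_pt (fun u v => @?f u v + @?g u v) _ _ =>
      apply (continuity_2d_pt_plus f g); continuity_2d
  | |- continuity_2d_pt (fun u v => @?f u v - @?g u v) _ _ =>
      apply (continuity_2d_pt_minus f g); continuity_2d
  | |- continuity_2d_pt (fun u v => @?f u v * @?g u v) _ _ =>
      apply (continuity_2d_pt_mult f g); continuity_2d
  | |- continuity_2d_pt (fun u v => - @?f u v) _ _ =>
      apply (continuity_2d_pt_opp f); continuity_2d
  | |- continuity_2d_pt (fun u v => / @?f u v) _ _ =>
      apply (continuity_2d_pt_inv f); [continuity_2d | idtac]
  | |- continuity_2d_pt (fun u v => @?f u v ^ _) _ _ =>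
      apply (continuity_2d_pt_pow f); continuity_2d
  | |- continuity_2d_pt (fun u v => cos (@?f u v)) _ _ =>
      apply (continuity_2d_pt_cos f); continuity_2d
  | |- continuity_2d_pt (fun u v => sin (@?f u v)) _ _ =>
      apply (continuity_2d_pt_sin f); continuity_2d
  | |- continuity_2d_pt (fun u v => u) _ _ => apply continuity_2d_pt_id1
  | |- continuity_2d_pt (fun u v => v) _ _ => apply continuity_2d_pt_id2
  | |- continuity_2d_pt (fun u v => _) _ _ => apply continuity_2d_pt_const
  end.

Lemma between_abs x u s :
  Rmin x u <= s <= Rmax x u -> Rabs (s - x) <= Rabs (u - x).
Proof.
  unfold Rmin, Rmax. destruct (Rle_dec x u); unfold Rabs; repeat destruct Rcase_abs; lra.
Qed.

Lemma MVT_between (f df : R -> R) x u :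
  (forall s, Rmin x u <= s <= Rmax x u -> is_derive f s (df s)) ->
  exists c, Rabs (c - x) <= Rabs (u - x) /\ f u - f x = df c * (u - x).
Proof.
  intros Hd. destruct (MVT_gen f x u df) as [c [Hc E]].
  - intros s Hs. apply Hd. lra.
  - intros s Hs. apply derivable_continuous_pt. exists (df s).
    apply is_derive_Reals, Hd, Hs.
  - exists c. split; [now apply between_abs|exact E].
Qed.

Lemma is_derive_continuity_pt (f : R -> R) t l : is_derive f t l -> continuity_pt f t.
Proof. intros H. apply derivable_continuous_pt. exists l. now apply is_derive_Reals. Qed.

Lemma derive_zero_const (h : R -> R) lo hi :
  (forall r, lo < r < hi -> is_derive h r 0) ->
  forall x y, lo < x < hi -> lo < y < hi -> h x = h y.
Proof.
  intros Hd x y Hx Hy.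
  destruct (MVT_between h (fun _ => 0) x y) as [c [_ E]]; [|lra].
  intros s Hs. apply Hd. unfold Rmin, Rmax in Hs. destruct (Rle_dec x y); lra.
Qed.

Lemma const_right_at_0 (h : R -> R) K :
  continuity_pt h 0 -> (forall r, 0 < r < 1 -> h r = K) -> h 0 = K.
Proof.
  intros Hc HK. destruct (Req_dec (h 0) K) as [E|NE]; [exact E|exfalso].
  assert (Heps : 0 < Rabs (h 0 - K)) by (apply Rabs_pos_lt; lra).
  destruct (Hc _ Heps) as [d [Hd P]].
  set (r := Rmin (d/2) (1/2)).
  assert (0 < r) by (apply Rmin_pos; lra).
  assert (r <= d/2) by apply Rmin_l. assert (r <= 1/2) by apply Rmin_r.
  specialize (P r). unfold D_x, no_cond, R_dist in P.
  assert (Hlt : Rabs (h r - h 0) < Rabs (h 0 - K)).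
  { apply P. split; [split; [exact I|lra]|].
    simpl. unfold R_dist. rewrite Rminus_0_r, Rabs_right; lra. }
  rewrite HK, Rabs_minus_sym in Hlt by lra. lra.
Qed.

Lemma is_derive_0_of_linear_right (g : R -> R) c l :
  is_derive g 0 l -> (forall r, 0 < r < 1 -> g r = c * r) -> l = c.
Proof.
  intros Hd Hg.
  set (q := fun r => g r - c * r).
  assert (Dq : derivable_pt_lim q 0 (l - c * 1)).
  { apply derivable_pt_lim_minus; [now apply is_derive_Reals|].
    apply derivable_pt_lim_scal, derivable_pt_lim_id. }
  assert (Hq0 : q 0 = 0).
  { apply const_right_at_0; [|intros r Hr; unfold q; rewrite Hg by exact Hr; ring].
    apply (is_derive_continuity_pt _ _ (l - c * 1)). now apply is_derive_Reals. }
  destruct (Req_dec l c) as [E|NE]; [exact E|exfalso].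
  assert (Heps : 0 < Rabs (l - c)) by (apply Rabs_pos_lt; lra).
  destruct (Dq _ Heps) as [d P].
  set (h := Rmin (d/2) (1/2)).
  assert (0 < h) by (apply Rmin_pos; [pose proof (cond_pos d)|]; lra).
  assert (h <= d/2) by apply Rmin_l. assert (h <= 1/2) by apply Rmin_r.
  specialize (P h ltac:(lra) ltac:(rewrite Rabs_right; lra)).
  unfold q in P, Hq0. rewrite Rplus_0_l, Hq0, Hg in P by lra.
  replace ((c * h - c * h - 0) / h - (l - c * 1)) with (- (l - c)) in P by (field; lra).
  rewrite Rabs_Ropp in P. lra.
Qed.

Lemma Cmod_pair x y : Cmod (x, y) = sqrt (x ^ 2 + y ^ 2).
Proof. reflexivity. Qed.

Lemma Cminus_pair x1 y1 x2 y2 : ((x1, y1) - (x2, y2))%C = (x1 - x2, y1 - y2).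
Proof. reflexivity. Qed.

Lemma Cmod_le_abs_sum x y : Cmod (x, y) <= Rabs x + Rabs y.
Proof.
  rewrite Cmod_pair. pose proof (Rabs_pos x). pose proof (Rabs_pos y).
  rewrite <- (sqrt_pow2 (Rabs x + Rabs y)) by lra.
  apply sqrt_le_1_alt. rewrite <- (pow2_abs x), <- (pow2_abs y).
  assert (0 <= Rabs x * Rabs y) by (apply Rmult_le_pos; lra). nra.
Qed.

Lemma Cmod_pair_sub_le x1 y1 x2 y2 :
  Cmod ((x1, y1) - (x2, y2)) <= Rabs (x1 - x2) + Rabs (y1 - y2).
Proof. rewrite Cminus_pair. apply Cmod_le_abs_sum. Qed.

Lemma Cmod_pair_le_shift s w x y :
  Cmod (s, w) <= Cmod (x, y) + Rabs (s - x) + Rabs (w - y).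
Proof.
  replace (s, w) with ((x, y) + ((s - x)%R, (w - y)%R))%C
    by (unfold Cplus; simpl; f_equal; ring).
  eapply Rle_trans; [apply Cmod_triangle|].
  pose proof (Cmod_le_abs_sum (s - x) (w - y)). lra.
Qed.

Lemma in_disk_box x y s w d :
  in_disk (x, y) -> d <= (1 - Cmod (x, y)) / 2 -> Rabs (s - x) < d -> Rabs (w - y) < d ->
  in_disk (s, w) /\ Cmod ((s, w) - (x, y)) < 2 * d.
Proof.
  unfold in_disk. intros Hin Hd Hs Hw. split.
  - pose proof (Cmod_pair_le_shift s w x y). lra.
  - pose proof (Cmod_pair_sub_le s w x y). lra.
Qed.

Lemma continuity_2d_pt_of_cont_within (H : C -> R) x y :
  cont_within in_disk H (x, y) -> in_disk (x, y) ->
  continuity_2d_pt (fun u v => H (u, v)) x y.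
Proof.
  intros HH Hin eps. destruct (HH eps (cond_pos eps)) as [d [Hd P]].
  set (d' := Rmin (d/2) ((1 - Cmod (x, y)) / 2)).
  assert (Hd' : 0 < d') by (unfold d', in_disk in *; apply Rmin_pos; lra).
  exists (mkposreal _ Hd'). simpl. intros u v Hu Hv.
  destruct (in_disk_box x y u v d' Hin (Rmin_r _ _) Hu Hv) as [Huv Hball].
  assert (d' <= d/2) by apply Rmin_l.
  apply P; [exact Huv|lra].
Qed.

Lemma increment_by_partials (H : C -> R) x y u v :
  (forall s w, Rabs (s - x) <= Rabs (u - x) -> Rabs (w - y) <= Rabs (v - y) ->
     ex_d1 H (s, w) /\ ex_d2 H (s, w)) ->
  exists c e, Rabs (c - x) <= Rabs (u - x) /\ Rabs (e - y) <= Rabs (v - y) /\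
    H (u, v) - H (x, y) = pd1 H (c, v) * (u - x) + pd2 H (x, e) * (v - y).
Proof.
  intros Hex.
  assert (Hx0 : Rabs (x - x) <= Rabs (u - x))
    by (rewrite Rminus_eq_0, Rabs_R0; apply Rabs_pos).
  destruct (MVT_between (fun s => H (s, v)) (fun s => pd1 H (s, v)) x u) as [c [Hc Ec]].
  { intros s Hs. apply (Derive_correct (fun s0 => H (s0, v))).
    apply (Hex s v (between_abs _ _ _ Hs) (Rle_refl _)). }
  destruct (MVT_between (fun w => H (x, w)) (fun w => pd2 H (x, w)) y v) as [e [He Ee]].
  { intros w Hw. apply (Derive_correct (fun w0 => H (x, w0))).
    apply (Hex x w Hx0 (between_abs _ _ _ Hw)). }
  exists c, e. split; [exact Hc|split; [exact He|]].
  simpl in Ec, Ee. lra.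
Qed.

Lemma differentiable_of_continuous_partials (H : C -> R) x y :
  (forall z, in_disk z -> ex_d1 H z /\ ex_d2 H z) ->
  cont_within in_disk (pd1 H) (x, y) -> cont_within in_disk (pd2 H) (x, y) ->
  in_disk (x, y) ->
  differentiable_pt_lim (fun u v => H (u, v)) x y (pd1 H (x, y)) (pd2 H (x, y)).
Proof.
  intros Hex H1 H2 Hin eps.
  pose proof (cond_pos eps) as He.
  destruct (H1 (eps/2) ltac:(lra)) as [d1 [Hd1 P1]].
  destruct (H2 (eps/2) ltac:(lra)) as [d2 [Hd2 P2]].
  set (d := Rmin ((1 - Cmod (x, y)) / 2) (Rmin (d1/2) (d2/2))).
  assert (Hd : 0 < d) by (unfold d, in_disk in *; repeat apply Rmin_pos; lra).
  assert (Hdd : d <= (1 - Cmod (x, y)) / 2 /\ d <= d1/2 /\ d <= d2/2).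
  { unfold d. pose proof (Rmin_l ((1 - Cmod (x, y)) / 2) (Rmin (d1/2) (d2/2))).
    pose proof (Rmin_r ((1 - Cmod (x, y)) / 2) (Rmin (d1/2) (d2/2))).
    pose proof (Rmin_l (d1/2) (d2/2)). pose proof (Rmin_r (d1/2) (d2/2)). lra. }
  exists (mkposreal _ Hd). simpl. intros u v Hu Hv.
  assert (Hbox : forall s w, Rabs (s - x) <= Rabs (u - x) -> Rabs (w - y) <= Rabs (v - y) ->
     in_disk (s, w) /\ Cmod ((s, w) - (x, y)) < 2 * d)
    by (intros s w Hs Hw; apply in_disk_box; [exact Hin|lra..]).
  destruct (increment_by_partials H x y u v) as (c & e & Hc & He' & ->).
  { intros s w Hs Hw. apply Hex, (Hbox s w Hs Hw). }
  destruct (Hbox c v Hc (Rle_refl _)) as [Hi1 Hm1].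
  destruct (Hbox x e ltac:(rewrite Rminus_eq_0, Rabs_R0; apply Rabs_pos) He') as [Hi2 Hm2].
  specialize (P1 (c, v) Hi1 ltac:(lra)). specialize (P2 (x, e) Hi2 ltac:(lra)).
  replace (pd1 H (c, v) * (u - x) + pd2 H (x, e) * (v - y) -
           (pd1 H (x, y) * (u - x) + pd2 H (x, y) * (v - y)))
    with ((pd1 H (c, v) - pd1 H (x, y)) * (u - x) + (pd2 H (x, e) - pd2 H (x, y)) * (v - y))
    by ring.
  eapply Rle_trans; [apply Rabs_triang|]. rewrite !Rabs_mult.
  pose proof (Rmax_l (Rabs (u - x)) (Rabs (v - y))).
  pose proof (Rmax_r (Rabs (u - x)) (Rabs (v - y))).
  assert (Rabs (pd1 H (c, v) - pd1 H (x, y)) * Rabs (u - x)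
          <= eps/2 * Rmax (Rabs (u - x)) (Rabs (v - y)))
    by (apply Rmult_le_compat; try apply Rabs_pos; lra).
  assert (Rabs (pd2 H (x, e) - pd2 H (x, y)) * Rabs (v - y)
          <= eps/2 * Rmax (Rabs (u - x)) (Rabs (v - y)))
    by (apply Rmult_le_compat; try apply Rabs_pos; lra).
  lra.
Qed.

Section C2Disk.

Variable psi : C -> R.
Hypothesis psi_C2 : C2_disk psi.

Lemma C2_disk_differentiable z : in_disk z ->
  differentiable_pt_lim (fun u v => psi (u, v)) (fst z) (snd z) (pd1 psi z) (pd2 psi z).
Proof.
  destruct z as [x y]. intros Hz.
  apply differentiable_of_continuous_partials; try apply psi_C2; auto.
  intros w Hw. destruct (psi_C2 w Hw) as [A [B _]]. now split.
Qed.

Lemma C2_disk_differentiable_pd1 z : in_disk z ->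
  differentiable_pt_lim (fun u v => pd1 psi (u, v)) (fst z) (snd z)
    (pd1 (pd1 psi) z) (pd2 (pd1 psi) z).
Proof.
  destruct z as [x y]. intros Hz.
  apply differentiable_of_continuous_partials; try apply psi_C2; auto.
  intros w Hw. destruct (psi_C2 w Hw) as [_ [_ [A [B _]]]]. now split.
Qed.

Lemma C2_disk_differentiable_pd2 z : in_disk z ->
  differentiable_pt_lim (fun u v => pd2 psi (u, v)) (fst z) (snd z)
    (pd1 (pd2 psi) z) (pd2 (pd2 psi) z).
Proof.
  destruct z as [x y]. intros Hz.
  apply differentiable_of_continuous_partials; try apply psi_C2; auto.
  intros w Hw. destruct (psi_C2 w Hw) as [_ [_ [_ [_ [A [B _]]]]]]. now split.
Qed.

Lemma C2_disk_schwarz x y : in_disk (x, y) ->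
  pd2 (pd1 psi) (x, y) = pd1 (pd2 psi) (x, y).
Proof.
  intros Hin. symmetry.
  apply (Schwarz (fun u v => psi (u, v)) x y).
  - assert (Hd : 0 < (1 - Cmod (x, y)) / 2) by (unfold in_disk in Hin; lra).
    exists (mkposreal _ Hd). simpl. intros u v Hu Hv.
    destruct (in_disk_box x y u v _ Hin (Rle_refl _) Hu Hv) as [Huv _].
    destruct (psi_C2 (u, v) Huv) as [E1 [E2 [_ [E4 [E5 _]]]]].
    now repeat split.
  - apply (continuity_2d_pt_of_cont_within (pd1 (pd2 psi))); [apply (psi_C2 _ Hin)|exact Hin].
  - apply (continuity_2d_pt_of_cont_within (pd2 (pd1 psi))); [apply (psi_C2 _ Hin)|exact Hin].
Qed.

End C2Disk.

Definition continuity_2d_within (S : R -> Prop) (f : R -> R -> R) r t : Prop :=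
  forall eps, 0 < eps -> exists d, 0 < d /\
    forall u v, S u -> Rabs (u - r) < d -> Rabs (v - t) < d -> Rabs (f u v - f r t) < eps.

Lemma continuity_2d_within_of_2d S f r t :
  continuity_2d_pt f r t -> continuity_2d_within S f r t.
Proof.
  intros H eps Heps. destruct (H (mkposreal eps Heps)) as [d Hd].
  exists d. split; [apply cond_pos|]. intros u v _. apply Hd.
Qed.

Lemma continuity_2d_pt_of_within f r t lo hi : lo < r < hi ->
  continuity_2d_within (fun u => lo < u < hi) f r t -> continuity_2d_pt f r t.
Proof.
  intros Hr H eps. destruct (H eps (cond_pos eps)) as [d [Hd P]].
  assert (Hm : 0 < Rmin d (Rmin (r - lo) (hi - r))) by (repeat apply Rmin_pos; lra).
  exists (mkposreal _ Hm). simpl. intros u v Hu Hv.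
  pose proof (Rmin_l d (Rmin (r - lo) (hi - r))). pose proof (Rmin_r d (Rmin (r - lo) (hi - r))).
  pose proof (Rmin_l (r - lo) (hi - r)). pose proof (Rmin_r (r - lo) (hi - r)).
  apply Rabs_def2 in Hu as Hu'.
  apply P; [lra|lra|lra].
Qed.

Lemma continuity_pt_of_within S f r t :
  S r -> continuity_2d_within S f r t -> continuity_pt (f r) t.
Proof.
  intros Hs H eps Heps. destruct (H eps Heps) as [d [Hd P]]. exists d. split; [exact Hd|].
  intros x [_ Hx]. apply P; [exact Hs| |exact Hx]. rewrite Rminus_eq_0, Rabs_R0. exact Hd.
Qed.

Lemma continuity_2d_within_mult S f g r t :
  continuity_2d_within S f r t -> continuity_2d_within S g r t ->
  continuity_2d_within S (fun u v => f u v * g u v) r t.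
Proof.
  intros Hf Hg eps Heps.
  set (A := Rabs (f r t)). set (B := Rabs (g r t)).
  assert (HA : 0 <= A) by apply Rabs_pos. assert (HB : 0 <= B) by apply Rabs_pos.
  set (e1 := Rmin 1 (eps / (2 * (B + 1)))).
  set (e2 := eps / (2 * (A + 2))).
  assert (He1 : 0 < e1) by (apply Rmin_pos; [lra|apply Rdiv_lt_0_compat; lra]).
  assert (He2 : 0 < e2) by (apply Rdiv_lt_0_compat; lra).
  assert (He1le : e1 <= 1) by apply Rmin_l.
  assert (He1B : e1 * (B + 1) <= eps / 2).
  { replace (eps / 2) with (eps / (2 * (B + 1)) * (B + 1)) by (field; lra).
    apply Rmult_le_compat_r; [lra|apply Rmin_r]. }
  assert (He2A : e2 * (A + 2) = eps / 2) by (unfold e2; field; lra).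
  destruct (Hf e1 He1) as [d1 [Hd1 P1]]. destruct (Hg e2 He2) as [d2 [Hd2 P2]].
  exists (Rmin d1 d2). split; [apply Rmin_pos; lra|].
  intros u v Hs Hu Hv.
  pose proof (Rmin_l d1 d2). pose proof (Rmin_r d1 d2).
  specialize (P1 u v Hs ltac:(lra) ltac:(lra)). specialize (P2 u v Hs ltac:(lra) ltac:(lra)).
  replace (f u v * g u v - f r t * g r t)
    with ((f u v - f r t) * g u v + f r t * (g u v - g r t)) by ring.
  eapply Rle_lt_trans; [apply Rabs_triang|]. rewrite !Rabs_mult. fold A.
  assert (Hg1 : Rabs (g u v) <= B + e2).
  { replace (g u v) with (g r t + (g u v - g r t)) by ring.
    eapply Rle_trans; [apply Rabs_triang|]. fold B. lra. }
  assert (Rabs (f u v - f r t) * Rabs (g u v) <= e1 * (B + e2))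
    by (apply Rmult_le_compat; try apply Rabs_pos; lra).
  assert (A * Rabs (g u v - g r t) <= A * e2) by (apply Rmult_le_compat_l; lra).
  nra.
Qed.

Lemma continuity_2d_within_comp (H : C -> R) (A : C -> Prop) (S : R -> Prop) f1 f2 r t :
  cont_within A H (f1 r t, f2 r t) ->
  continuity_2d_pt f1 r t -> continuity_2d_pt f2 r t ->
  (forall u v, S u -> A (f1 u v, f2 u v)) ->
  continuity_2d_within S (fun u v => H (f1 u v, f2 u v)) r t.
Proof.
  intros HH C1 C2 HA eps Heps.
  destruct (HH eps Heps) as [d [Hd P]].
  destruct (C1 (mkposreal (d/2) ltac:(lra))) as [d1 P1].
  destruct (C2 (mkposreal (d/2) ltac:(lra))) as [d2 P2].
  exists (Rmin d1 d2). split; [apply Rmin_pos; apply cond_pos|].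
  intros u v Hs Hu Hv.
  pose proof (Rmin_l d1 d2). pose proof (Rmin_r d1 d2).
  apply P; [now apply HA|].
  eapply Rle_lt_trans; [apply Cmod_pair_sub_le|].
  specialize (P1 u v ltac:(lra) ltac:(lra)). specialize (P2 u v ltac:(lra) ltac:(lra)).
  simpl in P1, P2. lra.
Qed.

Lemma ex_RInt_continuity_pt (f : R -> R) a b : a <= b ->
  (forall t, a <= t <= b -> continuity_pt f t) -> ex_RInt f a b.
Proof.
  intros Hab H. apply (ex_RInt_continuous (V := R_CompleteNormedModule)).
  intros z Hz. apply continuity_pt_filterlim, H.
  rewrite Rmin_left, Rmax_right in Hz; lra.
Qed.

Lemma RInt_ext_R (f g : R -> R) a b : (forall t, f t = g t) -> RInt f a b = RInt g a b.
Proof. intros H. apply (RInt_ext (V := R_CompleteNormedModule)). intros; apply H. Qed.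

Lemma RInt_lincomb (f g : R -> R) al be a b : ex_RInt f a b -> ex_RInt g a b ->
  RInt (fun t => al * f t + be * g t) a b = al * RInt f a b + be * RInt g a b.
Proof.
  intros Hf Hg. apply is_RInt_unique.
  apply (is_RInt_plus (V := R_NormedModule) (fun t => al * f t) (fun t => be * g t)).
  - apply (is_RInt_scal (V := R_NormedModule) f a b al).
    now apply (RInt_correct (V := R_CompleteNormedModule)).
  - apply (is_RInt_scal (V := R_NormedModule) g a b be).
    now apply (RInt_correct (V := R_CompleteNormedModule)).
Qed.

Lemma RInt_antiderivative (f G : R -> R) a b :
  (forall t, is_derive G t (f t)) -> (forall t, continuity_pt f t) ->
  RInt f a b = G b - G a.
Proof.
  intros D Cf. apply (is_RInt_unique (V := R_CompleteNormedModule)).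
  apply (is_RInt_derive (V := R_CompleteNormedModule) G f).
  - intros; apply D.
  - intros; apply continuity_pt_filterlim, Cf.
Qed.

Lemma is_derive_RInt_param_open (f df : R -> R -> R) a b lo hi r0 :
  a <= b -> lo < r0 < hi ->
  (forall r t, lo < r < hi -> is_derive (fun u => f u t) r (df r t)) ->
  (forall r t, lo < r < hi -> continuity_2d_pt df r t) ->
  (forall r t, lo < r < hi -> continuity_2d_pt f r t) ->
  is_derive (fun r => RInt (f r) a b) r0 (RInt (df r0) a b).
Proof.
  intros Hab Hr Hd Hc Hcf.
  assert (Hm : 0 < Rmin (r0 - lo) (hi - r0)) by (apply Rmin_pos; lra).
  assert (Hball : forall y, Rabs (y - r0) < Rmin (r0 - lo) (hi - r0) -> lo < y < hi).
  { intros y Hy. pose proof (Rmin_l (r0 - lo) (hi - r0)). pose proof (Rmin_r (r0 - lo) (hi - r0)).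
    apply Rabs_def2 in Hy. lra. }
  assert (Hloc : forall P : R -> Prop, (forall r, lo < r < hi -> P r) -> locally r0 P).
  { intros P HP. exists (mkposreal _ Hm). intros y Hy. now apply HP, Hball. }
  rewrite (RInt_ext_R (df r0) (fun t => Derive (fun u => f u t) r0))
    by (intros t; symmetry; now apply is_derive_unique, Hd).
  apply (is_derive_RInt_param f a b r0).
  - apply Hloc. intros r Hr' t _. eexists. now apply Hd.
  - intros t _. apply continuity_2d_pt_ext_loc with (f := df); [|now apply Hc].
    exists (mkposreal _ Hm). simpl. intros u v Hu _.
    symmetry. now apply is_derive_unique, Hd, Hball.
  - apply Hloc. intros r Hr'. apply ex_RInt_continuity_pt; [exact Hab|].
    intros t _. now apply continuity_pt_of_2d, Hcf.
Qed.

Lemma uniform_continuity_2d_within (f : R -> R -> R) S a b r0 :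
  S r0 -> (forall t, a <= t <= b -> continuity_2d_within S f r0 t) ->
  forall e, 0 < e -> exists d, 0 < d /\ forall r, S r -> Rabs (r - r0) < d ->
    forall t, a <= t <= b -> Rabs (f r t - f r0 t) <= e.
Proof.
  intros HS Hj e He.
  (* Pointwise continuity gives a gauge on [a, b]; compactness makes it uniform. *)
  assert (Hex : forall t, exists d : posreal, a <= t <= b ->
     forall u v, S u -> Rabs (u - r0) < d -> Rabs (v - t) < d -> Rabs (f u v - f r0 t) < e / 2).
  { intros t. destruct (Rle_dec a t) as [H1|H1]; [destruct (Rle_dec t b) as [H2|H2]|].
    - destruct (Hj t (conj H1 H2) (e/2) ltac:(lra)) as [d [Hd P]].
      exists (mkposreal d Hd). intros _. exact P.
    - exists (mkposreal 1 Rlt_0_1). intros Ht. lra.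
    - exists (mkposreal 1 Rlt_0_1). intros Ht. lra. }
  set (dl := fun t => proj1_sig (constructive_indefinite_description _ (Hex t))).
  assert (Hdl : forall t, a <= t <= b ->
     forall u v, S u -> Rabs (u - r0) < dl t -> Rabs (v - t) < dl t ->
     Rabs (f u v - f r0 t) < e / 2).
  { intros t. unfold dl. now destruct (constructive_indefinite_description _ (Hex t)). }
  destruct (compactness_value_1d a b dl) as [d Hd].
  exists d. split; [apply cond_pos|]. intros r Hr Hrd t Ht.
  apply Rnot_lt_le. intros Hc. apply (Hd t Ht). intros [t0 [Ht0 [Ht1 Ht2]]].
  assert (A1 := Hdl t0 Ht0 r t Hr ltac:(lra) Ht1).
  assert (A2 := Hdl t0 Ht0 r0 t HS ltac:(rewrite Rminus_eq_0, Rabs_R0; apply cond_pos) Ht1).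
  replace (f r t - f r0 t) with ((f r t - f r0 t0) - (f r0 t - f r0 t0)) in Hc by ring.
  pose proof (Rabs_triang (f r t - f r0 t0) (- (f r0 t - f r0 t0))) as Htri.
  change (f r t - f r0 t0 + - (f r0 t - f r0 t0))
    with (f r t - f r0 t0 - (f r0 t - f r0 t0)) in Htri.
  rewrite Rabs_Ropp in Htri. lra.
Qed.

Lemma RInt_param_continuous (f : R -> R -> R) S a b r0 : a <= b -> S r0 ->
  (forall t, a <= t <= b -> continuity_2d_within S f r0 t) ->
  (forall r, S r -> ex_RInt (f r) a b) ->
  forall eps, 0 < eps -> exists d, 0 < d /\ forall r, S r -> Rabs (r - r0) < d ->
    Rabs (RInt (f r) a b - RInt (f r0) a b) < eps.
Proof.
  intros Hab HS Hj Hi eps Heps.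
  set (e := eps / (2 * (b - a + 1))).
  assert (He : 0 < e) by (unfold e; apply Rdiv_lt_0_compat; lra).
  destruct (uniform_continuity_2d_within f S a b r0 HS Hj e He) as [d [Hd P]].
  exists d. split; [exact Hd|]. intros r Hr Hrd.
  rewrite <- (RInt_minus (V := R_CompleteNormedModule)) by now apply Hi.
  eapply Rle_lt_trans.
  - apply abs_RInt_le_const with (M := e); [exact Hab| |now apply P].
    apply (ex_RInt_minus (V := R_CompleteNormedModule)); now apply Hi.
  - assert ((b - a + 1) * e = eps / 2) by (unfold e; field; lra). lra.
Qed.

(** * The Euler equation r^2 I'' + r I' = n^2 I *)

Lemma pow_pred_mul r n : r * (INR n * r ^ pred n) = INR n * r ^ n.
Proof. destruct n; simpl; ring. Qed.

Lemma euler_first_integral n (I I1 I2 : R -> R) :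
  (forall r, -1 < r < 1 -> is_derive I r (I1 r)) ->
  (forall r, -1 < r < 1 -> is_derive I1 r (I2 r)) ->
  (forall r, -1 < r < 1 -> r ^ 2 * I2 r + r * I1 r = INR n ^ 2 * I r) ->
  forall r, 0 < r < 1 -> r * I1 r = INR n * I r.
Proof.
  intros D1 D2 E.
  (* [r^n (r I' - n I)] is a first integral of the Euler equation, and it vanishes at 0. *)
  set (h := fun r => r ^ n * (r * I1 r - INR n * I r)).
  set (dh := fun r => INR n * r ^ pred n * (r * I1 r - INR n * I r)
                      + r ^ n * (1 * I1 r + r * I2 r - (0 * I r + INR n * I1 r))).
  assert (Dh : forall r, -1 < r < 1 -> is_derive h r (dh r)).
  { intros r Hr. apply is_derive_Reals. unfold h, dh.
    apply (derivable_pt_lim_mult (fun r => r ^ n) (fun r => r * I1 r - INR n * I r));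
      [apply derivable_pt_lim_pow|].
    apply (derivable_pt_lim_minus (fun r => r * I1 r) (fun r => INR n * I r)).
    - apply (derivable_pt_lim_mult (fun r => r) I1);
        [apply derivable_pt_lim_id|now apply is_derive_Reals, D2].
    - apply (derivable_pt_lim_mult (fun _ => INR n) I);
        [apply derivable_pt_lim_const|now apply is_derive_Reals, D1]. }
  assert (Dh0 : forall r, 0 < r < 1 -> dh r = 0).
  { intros r Hr. apply Rmult_eq_reg_l with r; [|lra].
    transitivity (r ^ n * (r ^ 2 * I2 r + r * I1 r - INR n ^ 2 * I r)).
    - unfold dh.
      replace (r * (INR n * r ^ pred n * (r * I1 r - INR n * I r)
                    + r ^ n * (1 * I1 r + r * I2 r - (0 * I r + INR n * I1 r))))
        with (r * (INR n * r ^ pred n) * (r * I1 r - INR n * I r)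
              + r * (r ^ n * (1 * I1 r + r * I2 r - (0 * I r + INR n * I1 r)))) by ring.
      rewrite pow_pred_mul. ring.
    - rewrite E by lra. ring. }
  assert (Hh0 : h 0 = 0) by (unfold h; destruct n; simpl; ring).
  intros r Hr.
  assert (Hhr : h r = 0).
  { rewrite <- Hh0. symmetry. apply const_right_at_0.
    - apply (is_derive_continuity_pt _ _ (dh 0)), Dh. lra.
    - intros s Hs. apply (derive_zero_const h 0 1); [|exact Hs|exact Hr].
      intros u Hu. rewrite <- (Dh0 u Hu). apply Dh. lra. }
  unfold h in Hhr. assert (0 < r ^ n) by (apply pow_lt; lra).
  apply Rmult_integral in Hhr. destruct Hhr; lra.
Qed.

Lemma power_law_of_first_order n (I I1 : R -> R) :
  (forall r, 0 < r < 1 -> is_derive I r (I1 r)) ->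
  (forall r, 0 < r < 1 -> r * I1 r = INR n * I r) ->
  exists c, forall r, 0 < r < 1 -> I r = c * r ^ n.
Proof.
  intros D E.
  set (k := fun r => I r / r ^ n).
  assert (Dk : forall r, 0 < r < 1 -> is_derive k r 0).
  { intros r Hr. assert (0 < r ^ n) by (apply pow_lt; lra).
    apply is_derive_Reals. unfold k.
    replace 0 with ((I1 r * r ^ n - (INR n * r ^ pred n) * I r) / Rsqr (r ^ n)).
    - apply (derivable_pt_lim_div I (fun r => r ^ n));
        [now apply is_derive_Reals, D|apply derivable_pt_lim_pow|lra].
    - apply Rmult_eq_reg_l with r; [|lra].
      replace (r * ((I1 r * r ^ n - INR n * r ^ pred n * I r) / (r ^ n)²))
        with (((r * I1 r) * r ^ n - I r * (r * (INR n * r ^ pred n))) / (r ^ n)²)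
        by (unfold Rsqr; field; lra).
      rewrite pow_pred_mul, E by lra. unfold Rdiv. ring. }
  exists (k (1/2)). intros r Hr.
  rewrite <- (derive_zero_const k 0 1 Dk r (1/2) Hr ltac:(lra)).
  unfold k. assert (0 < r ^ n) by (apply pow_lt; lra). field. lra.
Qed.

Lemma power_law_limit_at_1 (I : R -> R) (n : nat) c B :
  (forall r, 0 < r < 1 -> I r = c * r ^ n) ->
  (forall eps, 0 < eps -> exists d, 0 < d /\
     forall r, 0 < r < 1 -> Rabs (r - 1) < d -> Rabs (I r - B) < eps) ->
  B = c.
Proof.
  intros HI HL.
  assert (Hc : continuity_pt (fun r => c * r ^ n) 1).
  { apply derivable_continuous_pt, derivable_pt_mult;
      [apply derivable_pt_const|apply derivable_pt_pow]. }
  destruct (Req_dec B c) as [E|NE]; [exact E|exfalso].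
  assert (Heps : 0 < Rabs (B - c) / 2) by (apply Rdiv_lt_0_compat; [apply Rabs_pos_lt; lra|lra]).
  destruct (HL _ Heps) as [d1 [Hd1 P1]].
  destruct (Hc _ Heps) as [d2 [Hd2 P2]].
  set (h := Rmin (d1/2) (Rmin (d2/2) (1/2))).
  assert (0 < h) by (repeat apply Rmin_pos; lra).
  assert (h <= d1/2 /\ h <= d2/2 /\ h <= 1/2) as (? & ? & ?).
  { unfold h. pose proof (Rmin_l (d1/2) (Rmin (d2/2) (1/2))).
    pose proof (Rmin_r (d1/2) (Rmin (d2/2) (1/2))).
    pose proof (Rmin_l (d2/2) (1/2)). pose proof (Rmin_r (d2/2) (1/2)). lra. }
  assert (Hr : 0 < 1 - h < 1) by lra.
  specialize (P1 (1 - h) Hr ltac:(rewrite Rabs_left; lra)).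
  assert (A2 : R_dist (c * (1 - h) ^ n) (c * 1 ^ n) < Rabs (B - c) / 2).
  { apply P2. split; [split; [constructor|lra]|].
    simpl. unfold R_dist. rewrite Rabs_left; lra. }
  rewrite pow1, Rmult_1_r in A2. unfold R_dist in A2. rewrite HI in P1 by exact Hr.
  pose proof (Rabs_triang (- (c * (1 - h) ^ n - B)) (c * (1 - h) ^ n - c)) as Htri.
  rewrite Rabs_Ropp in Htri.
  replace (- (c * (1 - h) ^ n - B) + (c * (1 - h) ^ n - c)) with (B - c) in Htri by ring.
  lra.
Qed.

Lemma derive_of_power_law (g dg : R -> R) c n :
  (forall r, 0 < r < 1 -> g r = c * r ^ n) -> (forall r, 0 < r < 1 -> is_derive g r (dg r)) ->
  forall r, 0 < r < 1 -> dg r = c * (INR n * r ^ pred n).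
Proof.
  intros Hg Dg r Hr. rewrite <- (is_derive_unique g r (dg r) (Dg r Hr)).
  apply is_derive_unique, (is_derive_ext_loc (fun r => c * r ^ n)).
  - assert (Hm : 0 < Rmin r (1 - r)) by (apply Rmin_pos; lra).
    exists (mkposreal _ Hm). intros y Hy. symmetry. apply Hg.
    pose proof (Rmin_l r (1 - r)). pose proof (Rmin_r r (1 - r)).
    change (Rabs (y - r) < Rmin r (1 - r)) in Hy. apply Rabs_def2 in Hy. lra.
  - apply is_derive_Reals.
    replace (c * (INR n * r ^ pred n)) with (0 * r ^ n + c * (INR n * r ^ pred n)) by ring.
    apply (derivable_pt_lim_mult (fun _ => c) (fun r => r ^ n));
      [apply derivable_pt_lim_const|apply derivable_pt_lim_pow].
Qed.

(** * Fourier modes of harmonic functions in polar coordinates *)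

(* [F r t] is a function on the closed unit disk in polar coordinates; [Fr], [Frr], [Ft],
   [Ftt] are its partial derivatives. *)
Record polar_harmonic (F Fr Frr Ft Ftt : R -> R -> R) : Prop := {
  polar_dr : forall r t, -1 < r < 1 -> is_derive (fun r => F r t) r (Fr r t);
  polar_drr : forall r t, -1 < r < 1 -> is_derive (fun r => Fr r t) r (Frr r t);
  polar_dt : forall r t, -1 < r < 1 -> is_derive (fun t => F r t) t (Ft r t);
  polar_dtt : forall r t, -1 < r < 1 -> is_derive (fun t => Ft r t) t (Ftt r t);
  polar_cont : forall r t, -1 < r < 1 -> continuity_2d_pt F r t;
  polar_cont_r : forall r t, -1 < r < 1 -> continuity_2d_pt Fr r t;
  polar_cont_rr : forall r t, -1 < r < 1 -> continuity_2d_pt Frr r t;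
  polar_cont_tt : forall r t, -1 < r < 1 -> continuity_2d_pt Ftt r t;
  polar_periodic : forall r, F r (2 * PI) = F r 0;
  polar_periodic_t : forall r, Ft r (2 * PI) = Ft r 0;
  polar_laplace : forall r t, -1 < r < 1 -> r ^ 2 * Frr r t + r * Fr r t + Ftt r t = 0;
  polar_cont_boundary : forall t, continuity_2d_within (fun u => -1 < u <= 1) F 1 t
}.

Definition periodic_mode (n : nat) (w w1 w2 : R -> R) : Prop :=
  (forall t, is_derive w t (w1 t)) /\ (forall t, is_derive w1 t (w2 t)) /\
  (forall t, w2 t = - INR n ^ 2 * w t) /\ w (2 * PI) = w 0 /\ w1 (2 * PI) = w1 0.

Definition fourier_coef (G : R -> R -> R) (w : R -> R) (r : R) : R :=
  RInt (fun t => G r t * w t) 0 (2 * PI).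

Lemma periodic_mode_continuous n w w1 w2 : periodic_mode n w w1 w2 ->
  (forall t, continuity_pt w t) /\ (forall t, continuity_pt w2 t).
Proof.
  intros [D1 [_ [E _]]]. split; intros t.
  - exact (is_derive_continuity_pt _ _ _ (D1 t)).
  - apply continuity_pt_ext with (f := fun t => - INR n ^ 2 * w t); [intros; now rewrite E|].
    apply continuity_pt_mult; [now apply continuity_pt_const|].
    exact (is_derive_continuity_pt _ _ _ (D1 t)).
Qed.

Lemma ex_fourier_coef (G : R -> R -> R) w r :
  (forall t, continuity_2d_pt G r t) -> (forall t, continuity_pt w t) ->
  ex_RInt (fun t => G r t * w t) 0 (2 * PI).
Proof.
  intros HG Hw. pose proof PI_RGT_0. apply ex_RInt_continuity_pt; [lra|].
  intros t _. apply (continuity_pt_of_2d (fun u v => G u v * w v)).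
  now apply continuity_2d_pt_mult_snd.
Qed.

Lemma is_derive_fourier_coef (G dG : R -> R -> R) w r : -1 < r < 1 ->
  (forall r t, -1 < r < 1 -> is_derive (fun r => G r t) r (dG r t)) ->
  (forall r t, -1 < r < 1 -> continuity_2d_pt G r t) ->
  (forall r t, -1 < r < 1 -> continuity_2d_pt dG r t) ->
  (forall t, continuity_pt w t) ->
  is_derive (fourier_coef G w) r (fourier_coef dG w r).
Proof.
  intros Hr D CG CdG Hw. pose proof PI_RGT_0.
  apply (is_derive_RInt_param_open (fun r t => G r t * w t) (fun r t => dG r t * w t)
           0 (2 * PI) (-1) 1 r); [lra|exact Hr| | |].
  - intros u t Hu. apply (is_derive_ext (fun u => G u t * w t)); [reflexivity|].
    replace (dG u t * w t) with (dG u t * w t + G u t * 0) by ring.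
    apply is_derive_Reals, (derivable_pt_lim_mult (fun u => G u t) (fun _ => w t));
      [now apply is_derive_Reals, D|apply derivable_pt_lim_const].
  - intros u t Hu. apply continuity_2d_pt_mult_snd; [now apply CdG|apply Hw].
  - intros u t Hu. apply continuity_2d_pt_mult_snd; [now apply CG|apply Hw].
Qed.

Section FourierModes.

Variables F Fr Frr Ft Ftt : R -> R -> R.
Hypothesis HF : polar_harmonic F Fr Frr Ft Ftt.

Lemma ex_fourier_coef_at_1 w : (forall t, continuity_pt w t) ->
  ex_RInt (fun t => F 1 t * w t) 0 (2 * PI).
Proof.
  intros Cw. pose proof PI_RGT_0. apply ex_RInt_continuity_pt; [lra|]. intros t _.
  apply (continuity_pt_of_within (fun u => -1 < u <= 1) (fun u v => F u v * w v)); [lra|].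
  apply (continuity_2d_within_mult _ F (fun _ v => w v)); [apply HF|].
  now apply continuity_2d_within_of_2d, continuity_2d_pt_snd.
Qed.

Section OneMode.

Variables (n : nat) (w w1 w2 : R -> R).
Hypothesis Hw : periodic_mode n w w1 w2.

Lemma fourier_coef_dr r : -1 < r < 1 ->
  is_derive (fourier_coef F w) r (fourier_coef Fr w r).
Proof.
  intros Hr. apply is_derive_fourier_coef; try apply HF; auto.
  apply (periodic_mode_continuous n w w1 w2 Hw).
Qed.

Lemma fourier_coef_drr r : -1 < r < 1 ->
  is_derive (fourier_coef Fr w) r (fourier_coef Frr w r).
Proof.
  intros Hr. apply is_derive_fourier_coef; try apply HF; auto.
  apply (periodic_mode_continuous n w w1 w2 Hw).
Qed.

(* Two integrations by parts in t; the boundary terms cancel by periodicity. *)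
Lemma fourier_coef_dtt r : -1 < r < 1 ->
  fourier_coef Ftt w r = - INR n ^ 2 * fourier_coef F w r.
Proof.
  intros Hr. destruct (periodic_mode_continuous n w w1 w2 Hw) as [Cw Cw2].
  destruct Hw as (D1 & D2 & E & P1 & P2).
  set (B := fun t => Ft r t * w t - F r t * w1 t).
  assert (IBP : is_RInt (fun t => Ftt r t * w t - F r t * w2 t) 0 (2 * PI)
                        (minus (B (2 * PI)) (B 0))).
  { apply (is_RInt_derive (V := R_CompleteNormedModule)).
    - intros t _. unfold B. apply is_derive_Reals.
      replace (Ftt r t * w t - F r t * w2 t) with
        ((Ftt r t * w t + Ft r t * w1 t) - (Ft r t * w1 t + F r t * w2 t)) by ring.
      apply derivable_pt_lim_minus; apply derivable_pt_lim_mult; apply is_derive_Reals;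
        auto; now apply HF.
    - intros t _. apply continuity_pt_filterlim.
      apply (continuity_pt_of_2d (fun u v => Ftt u v * w v - F u v * w2 v)).
      apply (continuity_2d_pt_minus (fun u v => Ftt u v * w v) (fun u v => F u v * w2 v));
        apply continuity_2d_pt_mult_snd; auto; now apply HF. }
  assert (B0 : minus (B (2 * PI)) (B 0) = 0).
  { unfold B. rewrite (polar_periodic _ _ _ _ _ HF), (polar_periodic_t _ _ _ _ _ HF), P1, P2.
    unfold minus, plus, opp. simpl. ring. }
  rewrite B0 in IBP. apply (is_RInt_unique (V := R_CompleteNormedModule)) in IBP.
  assert (Ex : forall G g, (forall t, continuity_2d_pt G r t) -> (forall t, continuity_pt g t) ->
                  ex_RInt (fun t => G r t * g t) 0 (2 * PI))
    by (intros; now apply ex_fourier_coef).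
  assert (ExF : forall g, (forall t, continuity_pt g t) ->
                  ex_RInt (fun t => F r t * g t) 0 (2 * PI))
    by (intros g Hg; apply Ex; [intros; now apply HF|exact Hg]).
  assert (ExFtt : ex_RInt (fun t => Ftt r t * w t) 0 (2 * PI))
    by (apply Ex; [intros; now apply HF|exact Cw]).
  pose proof (RInt_lincomb _ _ 1 (-1) 0 (2 * PI) ExFtt (ExF w2 Cw2)) as L.
  rewrite (RInt_ext_R _ (fun t => Ftt r t * w t - F r t * w2 t)), IBP in L by (intros; ring).
  rewrite (RInt_ext_R (fun t => F r t * w2 t)
             (fun t => - INR n ^ 2 * (F r t * w t) + 0 * (F r t * w t))),
    RInt_lincomb in L by (auto; intros; rewrite E; ring).
  unfold fourier_coef. lra.
Qed.

Lemma fourier_coef_euler r : -1 < r < 1 ->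
  r ^ 2 * fourier_coef Frr w r + r * fourier_coef Fr w r = INR n ^ 2 * fourier_coef F w r.
Proof.
  intros Hr. destruct (periodic_mode_continuous n w w1 w2 Hw) as [Cw _].
  assert (Ex : forall G, (forall r t, -1 < r < 1 -> continuity_2d_pt G r t) ->
                 ex_RInt (fun t => G r t * w t) 0 (2 * PI))
    by (intros G HG; apply ex_fourier_coef; [intros; now apply HG|exact Cw]).
  unfold fourier_coef at 1 2.
  rewrite <- RInt_lincomb by (apply Ex, HF).
  rewrite (RInt_ext_R _ (fun t => -1 * (Ftt r t * w t) + 0 * (Ftt r t * w t))).
  - rewrite RInt_lincomb by (apply Ex, HF).
    fold (fourier_coef Ftt w r). rewrite fourier_coef_dtt by exact Hr. ring.
  - intros t. pose proof (polar_laplace _ _ _ _ _ HF r t Hr). nra.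
Qed.

Lemma fourier_coef_limit_at_1 :
  forall eps, 0 < eps -> exists d, 0 < d /\ forall r, 0 < r < 1 -> Rabs (r - 1) < d ->
    Rabs (fourier_coef F w r - fourier_coef F w 1) < eps.
Proof.
  intros eps Heps. pose proof PI_RGT_0.
  destruct (periodic_mode_continuous n w w1 w2 Hw) as [Cw _].
  set (S := fun u => -1 < u <= 1).
  assert (J : forall t, continuity_2d_within S (fun u v => F u v * w v) 1 t).
  { intros t. apply (continuity_2d_within_mult S F (fun _ v => w v));
      [apply HF|now apply continuity_2d_within_of_2d, continuity_2d_pt_snd]. }
  destruct (RInt_param_continuous (fun u v => F u v * w v) S 0 (2 * PI) 1)
    with (eps := eps) as [d [Hd P]]; [lra|unfold S; lra|intros; apply J| |exact Heps|].
  - intros r Hr. destruct (Req_dec r 1) as [->|NE]; [now apply ex_fourier_coef_at_1|].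
    apply ex_fourier_coef; [|exact Cw]. intros t. apply HF. unfold S in Hr. lra.
  - exists d. split; [exact Hd|]. intros r Hr Hrd. apply P; [unfold S; lra|exact Hrd].
Qed.

Lemma fourier_coef_power r : 0 < r < 1 -> fourier_coef F w r = fourier_coef F w 1 * r ^ n.
Proof.
  assert (Hfi := euler_first_integral n _ _ _ fourier_coef_dr fourier_coef_drr fourier_coef_euler).
  destruct (power_law_of_first_order n (fourier_coef F w) (fourier_coef Fr w)) as [c Hc];
    [intros; apply fourier_coef_dr; lra|exact Hfi|].
  intros Hr. rewrite (power_law_limit_at_1 _ n c _ Hc fourier_coef_limit_at_1). now apply Hc.
Qed.

End OneMode.

Lemma fourier_mode0_at_0 w w1 w2 : periodic_mode 0 w w1 w2 ->
  fourier_coef F w 0 = fourier_coef F w 1.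
Proof.
  intros Hw. apply const_right_at_0.
  - apply (is_derive_continuity_pt _ _ _ (fourier_coef_dr 0 w w1 w2 Hw 0 ltac:(lra))).
  - intros r Hr. rewrite (fourier_coef_power 0 w w1 w2 Hw r Hr). simpl. ring.
Qed.

Lemma fourier_mode1_at_0 w w1 w2 : periodic_mode 1 w w1 w2 ->
  fourier_coef Fr w 0 = fourier_coef F w 1.
Proof.
  intros Hw. apply (is_derive_0_of_linear_right (fourier_coef F w));
    [apply (fourier_coef_dr 1 w w1 w2 Hw); lra|].
  intros r Hr. rewrite (fourier_coef_power 1 w w1 w2 Hw r Hr). simpl. ring.
Qed.

Lemma fourier_mode2_at_0 w w1 w2 : periodic_mode 2 w w1 w2 ->
  fourier_coef Frr w 0 = 2 * fourier_coef F w 1.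
Proof.
  intros Hw. apply (is_derive_0_of_linear_right (fourier_coef Fr w));
    [apply (fourier_coef_drr 2 w w1 w2 Hw); lra|].
  intros r Hr.
  rewrite (derive_of_power_law (fourier_coef F w) (fourier_coef Fr w) _ 2
             (fourier_coef_power 2 w w1 w2 Hw)); [simpl; ring| |exact Hr].
  intros s Hs. apply (fourier_coef_dr 2 w w1 w2 Hw). lra.
Qed.

End FourierModes.

(** * The Moebius map *)

(* [moeb (a, b) (x, y) = (moeb_re a b x y, moeb_im a b x y)].  Only the derivatives of the
   real part are named: by Cauchy-Riemann, [d/dx moeb_im = - moeb_re_dy] and
   [d/dy moeb_im = moeb_re_dx]. *)
Definition moeb_den a b x y := (1 + a * x + b * y) ^ 2 + (a * y - b * x) ^ 2.
Definition moeb_re a b x y :=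
  ((x + a) * (1 + a * x + b * y) + (y + b) * (a * y - b * x)) / moeb_den a b x y.
Definition moeb_im a b x y :=
  ((y + b) * (1 + a * x + b * y) - (x + a) * (a * y - b * x)) / moeb_den a b x y.
Definition moeb_scale a b := 1 - a ^ 2 - b ^ 2.
Definition moeb_re_dx a b x y :=
  moeb_scale a b * ((1 + a * x + b * y) ^ 2 - (a * y - b * x) ^ 2) / moeb_den a b x y ^ 2.
Definition moeb_re_dy a b x y :=
  moeb_scale a b * (2 * (1 + a * x + b * y) * (a * y - b * x)) / moeb_den a b x y ^ 2.
Definition moeb_re_dxx a b x y :=
  -2 * moeb_scale a b *
    (a * ((1 + a * x + b * y) ^ 3 - 3 * (1 + a * x + b * y) * (a * y - b * x) ^ 2)
     + b * ((a * y - b * x) ^ 3 - 3 * (1 + a * x + b * y) ^ 2 * (a * y - b * x)))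
  / moeb_den a b x y ^ 3.
Definition moeb_re_dxy a b x y :=
  2 * moeb_scale a b *
    (a * ((a * y - b * x) ^ 3 - 3 * (1 + a * x + b * y) ^ 2 * (a * y - b * x))
     - b * ((1 + a * x + b * y) ^ 3 - 3 * (1 + a * x + b * y) * (a * y - b * x) ^ 2))
  / moeb_den a b x y ^ 3.

Lemma moeb_den_pos a b x y : a ^ 2 + b ^ 2 < 1 -> x ^ 2 + y ^ 2 <= 1 -> 0 < moeb_den a b x y.
Proof.
  intros Hp Hz. unfold moeb_den.
  assert (HC : (a * x + b * y) ^ 2 + (a * y - b * x) ^ 2 = (a ^ 2 + b ^ 2) * (x ^ 2 + y ^ 2))
    by ring.
  assert (0 <= a ^ 2 + b ^ 2) by (apply Rplus_le_le_0_compat; apply pow2_ge_0).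
  assert (0 <= x ^ 2 + y ^ 2) by (apply Rplus_le_le_0_compat; apply pow2_ge_0).
  assert (0 <= (a * y - b * x) ^ 2) by apply pow2_ge_0.
  assert (H2 : (a * x + b * y) ^ 2 < 1) by nra.
  assert (0 < 1 + a * x + b * y) by nra.
  assert (0 < (1 + a * x + b * y) ^ 2) by (apply pow_lt; lra).
  lra.
Qed.

Lemma moeb_coords a b x y :
  0 < moeb_den a b x y -> moeb (a, b) (x, y) = (moeb_re a b x y, moeb_im a b x y).
Proof.
  unfold moeb_den. intros H.
  unfold moeb, moeb_re, moeb_im, moeb_den, Cdiv, Cinv, Cmult, Cconj, Cplus. simpl.
  f_equal; field; nra.
Qed.

Lemma moeb_norm2 a b x y : 0 < moeb_den a b x y ->
  moeb_re a b x y ^ 2 + moeb_im a b x y ^ 2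
  = 1 - moeb_scale a b * (1 - x ^ 2 - y ^ 2) / moeb_den a b x y.
Proof.
  unfold moeb_den. intros H. unfold moeb_re, moeb_im, moeb_scale, moeb_den. field. nra.
Qed.

Lemma moeb_scale_pos a b : a ^ 2 + b ^ 2 < 1 -> 0 < moeb_scale a b.
Proof. unfold moeb_scale. lra. Qed.

Lemma moeb_norm_compare a b x y : a ^ 2 + b ^ 2 < 1 -> x ^ 2 + y ^ 2 <= 1 ->
  (x ^ 2 + y ^ 2 < 1 -> moeb_re a b x y ^ 2 + moeb_im a b x y ^ 2 < 1) /\
  moeb_re a b x y ^ 2 + moeb_im a b x y ^ 2 <= 1 /\
  (x ^ 2 + y ^ 2 = 1 -> moeb_re a b x y ^ 2 + moeb_im a b x y ^ 2 = 1).
Proof.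
  intros Hp Hz.
  assert (HQ : 0 < moeb_den a b x y) by now apply moeb_den_pos.
  assert (Hk : 0 < moeb_scale a b) by now apply moeb_scale_pos.
  rewrite (moeb_norm2 a b x y HQ). unfold Rdiv.
  assert (Hi : 0 < / moeb_den a b x y) by now apply Rinv_0_lt_compat.
  repeat split; intros.
  - assert (0 < moeb_scale a b * (1 - x ^ 2 - y ^ 2) * / moeb_den a b x y)
      by (apply Rmult_lt_0_compat; [apply Rmult_lt_0_compat|]; lra).
    lra.
  - assert (0 <= moeb_scale a b * (1 - x ^ 2 - y ^ 2) * / moeb_den a b x y)
      by (apply Rmult_le_pos; [apply Rmult_le_pos|]; lra).
    lra.
  - replace (1 - x ^ 2 - y ^ 2) with 0 by lra. ring.
Qed.

Lemma in_disk_pair x y : in_disk (x, y) <-> x ^ 2 + y ^ 2 < 1.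
Proof.
  unfold in_disk. rewrite Cmod_pair.
  pose proof (pow2_ge_0 x). pose proof (pow2_ge_0 y).
  split; intros H1.
  - apply sqrt_lt_0_alt. now rewrite sqrt_1.
  - rewrite <- sqrt_1. apply sqrt_lt_1_alt. lra.
Qed.

Lemma closed_disk_pair x y : Cmod (x, y) <= 1 <-> x ^ 2 + y ^ 2 <= 1.
Proof.
  rewrite Cmod_pair.
  pose proof (pow2_ge_0 x). pose proof (pow2_ge_0 y).
  split; intros H1.
  - apply sqrt_le_0; [lra|lra|now rewrite sqrt_1].
  - rewrite <- sqrt_1. apply sqrt_le_1_alt. lra.
Qed.

(* The Moebius map in polar coordinates: [(pm1 a b r t, pm2 a b r t)] is the image of
   [r e^{it}], with radial derivatives [pm*_r], [pm*_rr]. *)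
Definition pm1 a b r t := moeb_re a b (r * cos t) (r * sin t).
Definition pm2 a b r t := moeb_im a b (r * cos t) (r * sin t).
Definition pm1_r a b r t :=
  cos t * moeb_re_dx a b (r * cos t) (r * sin t) + sin t * moeb_re_dy a b (r * cos t) (r * sin t).
Definition pm2_r a b r t :=
  - cos t * moeb_re_dy a b (r * cos t) (r * sin t) + sin t * moeb_re_dx a b (r * cos t) (r * sin t).
Definition pm1_rr a b r t :=
  cos t ^ 2 * moeb_re_dxx a b (r * cos t) (r * sin t)
  + 2 * cos t * sin t * moeb_re_dxy a b (r * cos t) (r * sin t)
  - sin t ^ 2 * moeb_re_dxx a b (r * cos t) (r * sin t).
Definition pm2_rr a b r t :=
  - cos t ^ 2 * moeb_re_dxy a b (r * cos t) (r * sin t)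
  + 2 * cos t * sin t * moeb_re_dxx a b (r * cos t) (r * sin t)
  + sin t ^ 2 * moeb_re_dxy a b (r * cos t) (r * sin t).

Lemma polar_norm2 r t : (r * cos t) ^ 2 + (r * sin t) ^ 2 = r ^ 2.
Proof. pose proof (sin2_cos2 t). unfold Rsqr in H. nra. Qed.

Section PolarMoebius.

Variables a b : R.
Hypothesis p_in_disk : a ^ 2 + b ^ 2 < 1.

Lemma moeb_den_polar_pos r t : -1 <= r <= 1 -> 0 < moeb_den a b (r * cos t) (r * sin t).
Proof. intros Hr. apply moeb_den_pos; [exact p_in_disk|]. rewrite polar_norm2. nra. Qed.

Lemma pm_in_disk r t : -1 < r < 1 -> in_disk (pm1 a b r t, pm2 a b r t).
Proof.
  intros Hr. apply in_disk_pair, moeb_norm_compare; [exact p_in_disk|rewrite polar_norm2; nra..].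
Qed.

Lemma pm_in_closed_disk r t : -1 <= r <= 1 -> Cmod (pm1 a b r t, pm2 a b r t) <= 1.
Proof.
  intros Hr. apply closed_disk_pair, moeb_norm_compare; [exact p_in_disk|rewrite polar_norm2; nra].
Qed.

Lemma moeb_circ t : moeb (a, b) (circ t) = (pm1 a b 1 t, pm2 a b 1 t).
Proof.
  unfold circ, pm1, pm2. rewrite !Rmult_1_l. apply moeb_coords.
  pose proof (moeb_den_polar_pos 1 t ltac:(lra)). now rewrite !Rmult_1_l in H.
Qed.

Lemma moeb_circ_on_circle t : on_circle (pm1 a b 1 t, pm2 a b 1 t).
Proof.
  unfold on_circle. rewrite Cmod_pair.
  destruct (moeb_norm_compare a b (1 * cos t) (1 * sin t)) as (_ & _ & E);
    [exact p_in_disk|rewrite polar_norm2; lra|].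
  fold (pm1 a b 1 t) (pm2 a b 1 t) in E. rewrite E; [apply sqrt_1|rewrite polar_norm2; lra].
Qed.

End PolarMoebius.

Ltac unfold_moeb :=
  unfold pm1, pm2, pm1_r, pm2_r, pm1_rr, pm2_rr, moeb_re, moeb_im, moeb_re_dx, moeb_re_dy,
    moeb_re_dxx, moeb_re_dxy, moeb_scale in *;
  unfold moeb_den in *.

Ltac moeb_derive den_pos :=
  unfold_moeb; auto_derive;
  [ try (repeat split; apply Rgt_not_eq; repeat apply Rmult_lt_0_compat; simpl in *; lra)
  | field; apply Rgt_not_eq; exact den_pos ].

Ltac moeb_continuity den_pos :=
  unfold_moeb; unfold Rdiv;
  continuity_2d; try apply pow_nonzero; apply Rgt_not_eq; exact den_pos.

Section PolarMoebiusSmooth.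

Variables a b r t : R.
Hypothesis den_pos : 0 < moeb_den a b (r * cos t) (r * sin t).

Lemma pm1_dr : is_derive (fun r => pm1 a b r t) r (pm1_r a b r t).
Proof. moeb_derive den_pos. Qed.
Lemma pm2_dr : is_derive (fun r => pm2 a b r t) r (pm2_r a b r t).
Proof. moeb_derive den_pos. Qed.
Lemma pm1_r_dr : is_derive (fun r => pm1_r a b r t) r (pm1_rr a b r t).
Proof. moeb_derive den_pos. Qed.
Lemma pm2_r_dr : is_derive (fun r => pm2_r a b r t) r (pm2_rr a b r t).
Proof. moeb_derive den_pos. Qed.

(* Holomorphy of the Moebius map: the angular derivatives are [i r] times the radial ones. *)
Lemma pm1_dt : is_derive (fun t => pm1 a b r t) t (- r * pm2_r a b r t).
Proof. moeb_derive den_pos. Qed.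
Lemma pm2_dt : is_derive (fun t => pm2 a b r t) t (r * pm1_r a b r t).
Proof. moeb_derive den_pos. Qed.
Lemma pm1_dtt : is_derive (fun t => - r * pm2_r a b r t) t
                  (- r ^ 2 * pm1_rr a b r t - r * pm1_r a b r t).
Proof. moeb_derive den_pos. Qed.
Lemma pm2_dtt : is_derive (fun t => r * pm1_r a b r t) t
                  (- r ^ 2 * pm2_rr a b r t - r * pm2_r a b r t).
Proof. moeb_derive den_pos. Qed.

Lemma continuity_pm1 : continuity_2d_pt (pm1 a b) r t.
Proof. moeb_continuity den_pos. Qed.
Lemma continuity_pm2 : continuity_2d_pt (pm2 a b) r t.
Proof. moeb_continuity den_pos. Qed.
Lemma continuity_pm1_r : continuity_2d_pt (pm1_r a b) r t.
Proof. moeb_continuity den_pos. Qed.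
Lemma continuity_pm2_r : continuity_2d_pt (pm2_r a b) r t.
Proof. moeb_continuity den_pos. Qed.
Lemma continuity_pm1_rr : continuity_2d_pt (pm1_rr a b) r t.
Proof. moeb_continuity den_pos. Qed.
Lemma continuity_pm2_rr : continuity_2d_pt (pm2_rr a b) r t.
Proof. moeb_continuity den_pos. Qed.

End PolarMoebiusSmooth.

Definition dir_deriv (psi : C -> R) (z : C) (d1 d2 : R) : R :=
  pd1 psi z * d1 + pd2 psi z * d2.

(* Second derivative of [psi] along a curve through [z] with velocity [(d1, d2)] and
   acceleration [(e1, e2)]. *)
Definition curve_deriv2 (psi : C -> R) (z : C) (d1 d2 e1 e2 : R) : R :=
  dir_deriv (pd1 psi) z d1 d2 * d1 + pd1 psi z * e1
  + (dir_deriv (pd2 psi) z d1 d2 * d2 + pd2 psi z * e2).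

Lemma is_derive_comp_2d (H : C -> R) (f1 f2 : R -> R) s l1 l2 d1 d2 :
  differentiable_pt_lim (fun u v => H (u, v)) (f1 s) (f2 s) l1 l2 ->
  is_derive f1 s d1 -> is_derive f2 s d2 ->
  is_derive (fun s => H (f1 s, f2 s)) s (l1 * d1 + l2 * d2).
Proof.
  intros HD D1 D2. apply is_derive_Reals.
  apply (derivable_pt_lim_comp_2d (fun u v => H (u, v)) f1 f2); [exact HD| |];
    now apply is_derive_Reals.
Qed.

Section Chain.

Variable psi : C -> R.
Hypothesis psi_C2 : C2_disk psi.
Variables (f1 f2 g1 g2 : R -> R) (s e1 e2 : R).
Hypothesis curve_in_disk : in_disk (f1 s, f2 s).
Hypotheses (D1 : is_derive f1 s (g1 s)) (D2 : is_derive f2 s (g2 s)).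

Lemma is_derive_comp_curve :
  is_derive (fun s => psi (f1 s, f2 s)) s (dir_deriv psi (f1 s, f2 s) (g1 s) (g2 s)).
Proof.
  apply is_derive_comp_2d; [|exact D1|exact D2].
  exact (C2_disk_differentiable psi psi_C2 _ curve_in_disk).
Qed.

Lemma is_derive_dir_deriv_curve : is_derive g1 s e1 -> is_derive g2 s e2 ->
  is_derive (fun s => dir_deriv psi (f1 s, f2 s) (g1 s) (g2 s)) s
    (curve_deriv2 psi (f1 s, f2 s) (g1 s) (g2 s) e1 e2).
Proof.
  intros E1 E2. unfold dir_deriv, curve_deriv2. apply is_derive_Reals.
  apply derivable_pt_lim_plus; apply derivable_pt_lim_mult; apply is_derive_Reals;
    try assumption; apply is_derive_comp_2d; try assumption.
  - exact (C2_disk_differentiable_pd1 psi psi_C2 _ curve_in_disk).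
  - exact (C2_disk_differentiable_pd2 psi psi_C2 _ curve_in_disk).
Qed.

End Chain.

Definition pullback (psi : C -> R) a b r t := psi (pm1 a b r t, pm2 a b r t).
Definition pullback_r (psi : C -> R) a b r t :=
  dir_deriv psi (pm1 a b r t, pm2 a b r t) (pm1_r a b r t) (pm2_r a b r t).
Definition pullback_t (psi : C -> R) a b r t :=
  dir_deriv psi (pm1 a b r t, pm2 a b r t) (- r * pm2_r a b r t) (r * pm1_r a b r t).
Definition pullback_rr (psi : C -> R) a b r t :=
  curve_deriv2 psi (pm1 a b r t, pm2 a b r t) (pm1_r a b r t) (pm2_r a b r t)
    (pm1_rr a b r t) (pm2_rr a b r t).
Definition pullback_tt (psi : C -> R) a b r t :=
  curve_deriv2 psi (pm1 a b r t, pm2 a b r t) (- r * pm2_r a b r t) (r * pm1_r a b r t)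
    (- r ^ 2 * pm1_rr a b r t - r * pm1_r a b r t) (- r ^ 2 * pm2_rr a b r t - r * pm2_r a b r t).

Lemma pullback_polar_laplacian psi a b r t :
  r ^ 2 * pullback_rr psi a b r t + r * pullback_r psi a b r t + pullback_tt psi a b r t
  = r ^ 2 * (pd1 (pd1 psi) (pm1 a b r t, pm2 a b r t) + pd2 (pd2 psi) (pm1 a b r t, pm2 a b r t))
    * (pm1_r a b r t ^ 2 + pm2_r a b r t ^ 2).
Proof. unfold pullback_rr, pullback_r, pullback_tt, curve_deriv2, dir_deriv. ring. Qed.

Section Pullback.

Variables (psi : C -> R) (a b : R).
Hypothesis p_in_disk : a ^ 2 + b ^ 2 < 1.
Hypothesis psi_C2 : C2_disk psi.
Hypothesis psi_harmonic : forall z, in_disk z -> pd1 (pd1 psi) z + pd2 (pd2 psi) z = 0.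
Hypothesis psi_cont : forall z, Cmod z <= 1 -> cont_within (fun y => Cmod y <= 1) psi z.

Lemma continuity_pullback_comp (H : C -> R) r t :
  (forall z, in_disk z -> cont_within in_disk H z) -> -1 < r < 1 ->
  continuity_2d_pt (fun u v => H (pm1 a b u v, pm2 a b u v)) r t.
Proof.
  intros HH Hr. apply (continuity_2d_pt_of_within _ r t (-1) 1 Hr).
  assert (Hden := moeb_den_polar_pos a b p_in_disk r t ltac:(lra)).
  apply continuity_2d_within_comp with (A := in_disk).
  - apply HH, pm_in_disk; assumption.
  - now apply continuity_pm1.
  - now apply continuity_pm2.
  - intros u v Hu. now apply pm_in_disk.
Qed.

Ltac pullback_continuity :=
  lazymatch goal with
  | |- continuity_2d_pt (fun u v => @?f u v + @?g u v) _ _ =>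
      apply (continuity_2d_pt_plus f g); pullback_continuity
  | |- continuity_2d_pt (fun u v => @?f u v - @?g u v) _ _ =>
      apply (continuity_2d_pt_minus f g); pullback_continuity
  | |- continuity_2d_pt (fun u v => @?f u v * @?g u v) _ _ =>
      apply (continuity_2d_pt_mult f g); pullback_continuity
  | |- continuity_2d_pt (fun u v => - @?f u v) _ _ =>
      apply (continuity_2d_pt_opp f); pullback_continuity
  | |- continuity_2d_pt (fun u v => @?f u v ^ _) _ _ =>
      apply (continuity_2d_pt_pow f); pullback_continuity
  | |- continuity_2d_pt (fun u v => ?H (pm1 a b u v, pm2 a b u v)) _ _ =>
      apply continuity_pullback_comp; [intros ?z ?Hz; apply (psi_C2 _ Hz)|assumption]
  | |- continuity_2d_pt (fun u v => pm1_r a b u v) _ _ =>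
      apply continuity_pm1_r, moeb_den_polar_pos; [assumption|lra]
  | |- continuity_2d_pt (fun u v => pm2_r a b u v) _ _ =>
      apply continuity_pm2_r, moeb_den_polar_pos; [assumption|lra]
  | |- continuity_2d_pt (fun u v => pm1_rr a b u v) _ _ =>
      apply continuity_pm1_rr, moeb_den_polar_pos; [assumption|lra]
  | |- continuity_2d_pt (fun u v => pm2_rr a b u v) _ _ =>
      apply continuity_pm2_rr, moeb_den_polar_pos; [assumption|lra]
  | |- continuity_2d_pt (fun u v => u) _ _ => apply continuity_2d_pt_id1
  end.

Lemma pullback_polar_harmonic :
  polar_harmonic (pullback psi a b) (pullback_r psi a b) (pullback_rr psi a b)
    (pullback_t psi a b) (pullback_tt psi a b).
Proof.
  assert (Hden : forall r t, -1 < r < 1 -> 0 < moeb_den a b (r * cos t) (r * sin t))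
    by (intros; apply moeb_den_polar_pos; [assumption|lra]).
  constructor.
  - intros r t Hr.
    apply (is_derive_comp_curve psi psi_C2 (fun r => pm1 a b r t) (fun r => pm2 a b r t)
             (fun r => pm1_r a b r t) (fun r => pm2_r a b r t));
      [now apply pm_in_disk|apply pm1_dr|apply pm2_dr]; now apply Hden.
  - intros r t Hr.
    apply (is_derive_dir_deriv_curve psi psi_C2 (fun r => pm1 a b r t) (fun r => pm2 a b r t)
             (fun r => pm1_r a b r t) (fun r => pm2_r a b r t));
      [now apply pm_in_disk|apply pm1_dr|apply pm2_dr|apply pm1_r_dr|apply pm2_r_dr];
      now apply Hden.
  - intros r t Hr.
    apply (is_derive_comp_curve psi psi_C2 (fun t => pm1 a b r t) (fun t => pm2 a b r t)
             (fun t => - r * pm2_r a b r t) (fun t => r * pm1_r a b r t));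
      [now apply pm_in_disk|apply pm1_dt|apply pm2_dt]; now apply Hden.
  - intros r t Hr.
    apply (is_derive_dir_deriv_curve psi psi_C2 (fun t => pm1 a b r t) (fun t => pm2 a b r t)
             (fun t => - r * pm2_r a b r t) (fun t => r * pm1_r a b r t));
      [now apply pm_in_disk|apply pm1_dt|apply pm2_dt|apply pm1_dtt|apply pm2_dtt];
      now apply Hden.
  - intros r t Hr. unfold pullback. pullback_continuity.
  - intros r t Hr. unfold pullback_r, dir_deriv. pullback_continuity.
  - intros r t Hr. unfold pullback_rr, curve_deriv2, dir_deriv. pullback_continuity.
  - intros r t Hr. unfold pullback_tt, curve_deriv2, dir_deriv. pullback_continuity.
  - intros r. unfold pullback, pm1, pm2. now rewrite cos_2PI, sin_2PI, cos_0, sin_0.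
  - intros r. unfold pullback_t, pm1, pm2, pm1_r, pm2_r. now rewrite cos_2PI, sin_2PI, cos_0, sin_0.
  - intros r t Hr. rewrite pullback_polar_laplacian, psi_harmonic by now apply pm_in_disk. ring.
  - intros t. unfold pullback.
    assert (Hden1 : 0 < moeb_den a b (1 * cos t) (1 * sin t))
      by (apply moeb_den_polar_pos; [assumption|lra]).
    apply continuity_2d_within_comp with (A := fun y => Cmod y <= 1).
    + apply psi_cont, pm_in_closed_disk; [assumption|lra].
    + now apply continuity_pm1.
    + now apply continuity_pm2.
    + intros u v Hu. apply pm_in_closed_disk; [assumption|lra].
Qed.

End Pullback.

(* [RInt] on real functions lives in [R_CompleteNormedModule]; [ring] needs [@eq R]. *)
Ltac change_to_R := match goal with |- @eq _ ?x ?y => change (@eq R x y) end.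

Ltac smooth_continuity :=
  intros ?; apply derivable_continuous_pt, ex_derive_Reals_0; auto_derive; auto.

Lemma sin2_cos2_pow t : sin t ^ 2 + cos t ^ 2 = 1.
Proof. pose proof (sin2_cos2 t) as H. unfold Rsqr in H. simpl. lra. Qed.

Lemma cos_sin_4PI : cos (2 * (2 * PI)) = 1 /\ sin (2 * (2 * PI)) = 0.
Proof. rewrite (cos_2a (2 * PI)), (sin_2a (2 * PI)), cos_2PI, sin_2PI. split; ring. Qed.

Lemma cos_sin_2_0 : cos (2 * 0) = 1 /\ sin (2 * 0) = 0.
Proof. rewrite Rmult_0_r, cos_0, sin_0. now split. Qed.

Lemma RInt_const_2PI (c : R) : RInt (fun _ => c) 0 (2 * PI) = 2 * PI * c.
Proof.
  rewrite (RInt_antiderivative _ (fun t => c * t)); [change_to_R; ring| |smooth_continuity].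
  intros t. auto_derive; [auto|ring].
Qed.

Lemma RInt_linear_cos k X Y :
  RInt (fun t => (X * (k * cos t) + Y * (k * sin t)) * cos t) 0 (2 * PI) = PI * k * X.
Proof.
  rewrite (RInt_antiderivative _ (fun t => k * (X * (t + sin t * cos t) / 2 + Y * sin t ^ 2 / 2))).
  - rewrite cos_2PI, sin_2PI, cos_0, sin_0. change_to_R. field.
  - intros t. auto_derive; [auto|]. change_to_R.
    assert (k * X * (sin t ^ 2 + cos t ^ 2) = k * X) by (rewrite sin2_cos2_pow; ring). lra.
  - smooth_continuity.
Qed.

Lemma RInt_linear_sin k X Y :
  RInt (fun t => (X * (k * cos t) + Y * (k * sin t)) * sin t) 0 (2 * PI) = PI * k * Y.
Proof.
  rewrite (RInt_antiderivative _ (fun t => k * (X * sin t ^ 2 / 2 + Y * (t - sin t * cos t) / 2))).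
  - rewrite cos_2PI, sin_2PI, cos_0, sin_0. change_to_R. field.
  - intros t. auto_derive; [auto|]. change_to_R.
    assert (k * Y * (sin t ^ 2 + cos t ^ 2) = k * Y) by (rewrite sin2_cos2_pow; ring). lra.
  - smooth_continuity.
Qed.

Definition quad_form (A B C E x y : R) : R := (A * x + B * y) * x + (C * x + E * y) * y.

Lemma RInt_quadratic_cos2 k A B C E :
  RInt (fun t => quad_form A B C E (k * cos t) (k * sin t) * cos (2 * t)) 0 (2 * PI)
  = k ^ 2 * PI * (A - E) / 2.
Proof.
  rewrite (RInt_ext_R _ (fun t => k ^ 2 * ((A + E) / 2 * cos (2 * t) + (A - E) / 2 * cos (2 * t) ^ 2
                                           + (B + C) / 2 * (sin (2 * t) * cos (2 * t))))).
  2: { intros t. unfold quad_form. rewrite cos_2a, sin_2a. pose proof (sin2_cos2_pow t).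
       assert (k ^ 2 * (A + E) * (cos t * cos t - sin t * sin t) * (sin t ^ 2 + cos t ^ 2)
               = k ^ 2 * (A + E) * (cos t * cos t - sin t * sin t)) by (rewrite H; ring).
       lra. }
  rewrite (RInt_antiderivative _ (fun t => k ^ 2 * ((A + E) / 4 * sin (2 * t)
             + (A - E) / 2 * (t / 2 + sin (2 * t) * cos (2 * t) / 4)
             + (B + C) / 8 * sin (2 * t) ^ 2))).
  - destruct cos_sin_4PI as [-> ->]. destruct cos_sin_2_0 as [-> ->]. change_to_R. field.
  - intros t. auto_derive; [auto|]. change_to_R. pose proof (sin2_cos2_pow (2 * t)).
    assert (k ^ 2 * (A - E) * (sin (2 * t) ^ 2 + cos (2 * t) ^ 2) = k ^ 2 * (A - E))
      by (rewrite H; ring). lra.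
  - smooth_continuity.
Qed.

Lemma RInt_quadratic_sin2 k A B C E :
  RInt (fun t => quad_form A B C E (k * cos t) (k * sin t) * sin (2 * t)) 0 (2 * PI)
  = k ^ 2 * PI * (B + C) / 2.
Proof.
  rewrite (RInt_ext_R _ (fun t => k ^ 2 * ((A + E) / 2 * sin (2 * t)
                                           + (A - E) / 2 * (cos (2 * t) * sin (2 * t))
                                           + (B + C) / 2 * sin (2 * t) ^ 2))).
  2: { intros t. unfold quad_form. rewrite cos_2a, sin_2a. pose proof (sin2_cos2_pow t).
       assert (k ^ 2 * (A + E) * (sin t * cos t) * (sin t ^ 2 + cos t ^ 2)
               = k ^ 2 * (A + E) * (sin t * cos t)) by (rewrite H; ring).
       lra. }
  rewrite (RInt_antiderivative _ (fun t => k ^ 2 * (- (A + E) / 4 * cos (2 * t)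
             + (A - E) / 8 * sin (2 * t) ^ 2
             + (B + C) / 2 * (t / 2 - sin (2 * t) * cos (2 * t) / 4)))).
  - destruct cos_sin_4PI as [-> ->]. destruct cos_sin_2_0 as [-> ->]. change_to_R. field.
  - intros t. auto_derive; [auto|]. change_to_R. pose proof (sin2_cos2_pow (2 * t)).
    assert (k ^ 2 * (B + C) * (sin (2 * t) ^ 2 + cos (2 * t) ^ 2) = k ^ 2 * (B + C))
      by (rewrite H; ring). lra.
  - smooth_continuity.
Qed.

Ltac split_mode := split; [|split; [|split; [|split]]].

Lemma periodic_mode_one : periodic_mode 0 (fun _ => 1) (fun _ => 0) (fun _ => 0).
Proof.
  split_mode; try (intros; apply (is_derive_const (K := R_AbsRing) (V := R_NormedModule)));
    try reflexivity.
  intros. simpl. ring.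
Qed.

Lemma periodic_mode_cos : periodic_mode 1 cos (fun t => - sin t) (fun t => - cos t).
Proof.
  split_mode; try (intros t; auto_derive; [auto|ring]).
  - intros t. simpl. ring.
  - now rewrite cos_2PI, cos_0.
  - now rewrite sin_2PI, sin_0.
Qed.

Lemma periodic_mode_sin : periodic_mode 1 sin cos (fun t => - sin t).
Proof.
  split_mode; try (intros t; auto_derive; [auto|ring]).
  - intros t. simpl. ring.
  - now rewrite sin_2PI, sin_0.
  - now rewrite cos_2PI, cos_0.
Qed.

Lemma periodic_mode_cos2 :
  periodic_mode 2 (fun t => cos (2 * t)) (fun t => -2 * sin (2 * t)) (fun t => -4 * cos (2 * t)).
Proof.
  destruct cos_sin_4PI as [T1 T2]. destruct cos_sin_2_0 as [T3 T4].
  split_mode; try (intros t; auto_derive; [auto|ring]).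
  - intros t. simpl. ring.
  - now rewrite T1, T3.
  - now rewrite T2, T4.
Qed.

Lemma periodic_mode_sin2 :
  periodic_mode 2 (fun t => sin (2 * t)) (fun t => 2 * cos (2 * t)) (fun t => -4 * sin (2 * t)).
Proof.
  destruct cos_sin_4PI as [T1 T2]. destruct cos_sin_2_0 as [T3 T4].
  split_mode; try (intros t; auto_derive; [auto|ring]).
  - intros t. simpl. ring.
  - now rewrite T2, T4.
  - now rewrite T1, T3.
Qed.

(** * Boundary moments *)

Section AtCentre.

Variables (psi : C -> R) (a b : R).

Let k := moeb_scale a b.

Lemma pm_at_0 t : pm1 a b 0 t = a /\ pm2 a b 0 t = b /\
  pm1_r a b 0 t = k * cos t /\ pm2_r a b 0 t = k * sin t.
Proof.
  unfold pm1, pm2, pm1_r, pm2_r, moeb_re, moeb_im, moeb_re_dx, moeb_re_dy, moeb_den, k.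
  rewrite !Rmult_0_l. repeat split; field.
Qed.

Lemma fourier_pullback_one_at_0 :
  fourier_coef (pullback psi a b) (fun _ => 1) 0 = 2 * PI * psi (a, b).
Proof.
  unfold fourier_coef. rewrite <- RInt_const_2PI. apply RInt_ext_R. intros t.
  unfold pullback. destruct (pm_at_0 t) as (-> & -> & _). ring.
Qed.

Lemma fourier_pullback_r_cos_at_0 :
  fourier_coef (pullback_r psi a b) cos 0 = PI * k * pd1 psi (a, b).
Proof.
  unfold fourier_coef. rewrite <- (RInt_linear_cos k _ (pd2 psi (a, b))). apply RInt_ext_R.
  intros t. unfold pullback_r, dir_deriv. destruct (pm_at_0 t) as (-> & -> & -> & ->). ring.
Qed.

Lemma fourier_pullback_r_sin_at_0 :
  fourier_coef (pullback_r psi a b) sin 0 = PI * k * pd2 psi (a, b).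
Proof.
  unfold fourier_coef. rewrite <- (RInt_linear_sin k (pd1 psi (a, b))). apply RInt_ext_R.
  intros t. unfold pullback_r, dir_deriv. destruct (pm_at_0 t) as (-> & -> & -> & ->). ring.
Qed.

Lemma pullback_rr_at_0 t : pd1 psi (a, b) = 0 -> pd2 psi (a, b) = 0 ->
  pullback_rr psi a b 0 t
  = quad_form (pd1 (pd1 psi) (a, b)) (pd2 (pd1 psi) (a, b)) (pd1 (pd2 psi) (a, b))
      (pd2 (pd2 psi) (a, b)) (k * cos t) (k * sin t).
Proof.
  intros H1 H2. unfold pullback_rr, curve_deriv2, dir_deriv, quad_form.
  destruct (pm_at_0 t) as (-> & -> & -> & ->). rewrite H1, H2. ring.
Qed.

Lemma fourier_pullback_rr_cos2_at_0 : pd1 psi (a, b) = 0 -> pd2 psi (a, b) = 0 ->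
  fourier_coef (pullback_rr psi a b) (fun t => cos (2 * t)) 0
  = k ^ 2 * PI * (pd1 (pd1 psi) (a, b) - pd2 (pd2 psi) (a, b)) / 2.
Proof.
  intros H1 H2. unfold fourier_coef.
  rewrite <- (RInt_quadratic_cos2 k (pd1 (pd1 psi) (a, b)) (pd2 (pd1 psi) (a, b))
                (pd1 (pd2 psi) (a, b)) (pd2 (pd2 psi) (a, b))).
  apply RInt_ext_R.
  intros t. now rewrite pullback_rr_at_0.
Qed.

Lemma fourier_pullback_rr_sin2_at_0 : pd1 psi (a, b) = 0 -> pd2 psi (a, b) = 0 ->
  fourier_coef (pullback_rr psi a b) (fun t => sin (2 * t)) 0
  = k ^ 2 * PI * (pd2 (pd1 psi) (a, b) + pd1 (pd2 psi) (a, b)) / 2.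
Proof.
  intros H1 H2. unfold fourier_coef.
  rewrite <- (RInt_quadratic_sin2 k (pd1 (pd1 psi) (a, b)) (pd2 (pd1 psi) (a, b))
                (pd1 (pd2 psi) (a, b)) (pd2 (pd2 psi) (a, b))).
  apply RInt_ext_R.
  intros t. now rewrite pullback_rr_at_0.
Qed.

End AtCentre.

Section BoundaryMoments.

Variables (g psi : C -> R) (a b : R).
Hypothesis psi_solves : dirichlet_solution g psi.
Hypothesis p_in_disk : a ^ 2 + b ^ 2 < 1.

Local Notation F := (pullback psi a b).

Lemma solution_pullback_polar_harmonic :
  polar_harmonic F (pullback_r psi a b) (pullback_rr psi a b) (pullback_t psi a b)
    (pullback_tt psi a b).
Proof. destruct psi_solves as (? & ? & ? & _). now apply pullback_polar_harmonic. Qed.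

Lemma bint_moeb (W : C -> R) :
  bint (fun z => g (moeb (a, b) z) * W z) = fourier_coef F (fun t => W (circ t)) 1.
Proof.
  destruct psi_solves as (_ & _ & _ & Hbd).
  unfold bint, fourier_coef. apply RInt_ext_R. intros t.
  rewrite moeb_circ by exact p_in_disk.
  rewrite <- Hbd by now apply moeb_circ_on_circle. reflexivity.
Qed.

Lemma bint_moeb_mean : bint (fun z => g (moeb (a, b) z)) = 2 * PI * psi (a, b).
Proof.
  transitivity (bint (fun z => g (moeb (a, b) z) * 1));
    [unfold bint; apply RInt_ext_R; intros; ring|].
  rewrite bint_moeb, <- (fourier_mode0_at_0 _ _ _ _ _ solution_pullback_polar_harmonic _ _ _ periodic_mode_one).
  apply fourier_pullback_one_at_0.
Qed.

Lemma bint_moeb_fst :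
  bint (fun z => g (moeb (a, b) z) * fst z) = PI * moeb_scale a b * pd1 psi (a, b).
Proof.
  rewrite bint_moeb. change (fun t => fst (circ t)) with cos.
  rewrite <- (fourier_mode1_at_0 _ _ _ _ _ solution_pullback_polar_harmonic _ _ _ periodic_mode_cos).
  apply fourier_pullback_r_cos_at_0.
Qed.

Lemma bint_moeb_snd :
  bint (fun z => g (moeb (a, b) z) * snd z) = PI * moeb_scale a b * pd2 psi (a, b).
Proof.
  rewrite bint_moeb. change (fun t => snd (circ t)) with sin.
  rewrite <- (fourier_mode1_at_0 _ _ _ _ _ solution_pullback_polar_harmonic _ _ _ periodic_mode_sin).
  apply fourier_pullback_r_sin_at_0.
Qed.

Lemma bint_moeb_fst_sq : bint (fun z => g (moeb (a, b) z) * fst z ^ 2)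
  = PI * psi (a, b) + fourier_coef F (fun t => cos (2 * t)) 1 / 2.
Proof.
  rewrite bint_moeb. unfold fourier_coef.
  rewrite (RInt_ext_R _ (fun t => / 2 * (F 1 t * 1) + / 2 * (F 1 t * cos (2 * t))))
    by (intros; simpl; rewrite cos_2a_cos; field).
  rewrite RInt_lincomb;
    [|apply (ex_fourier_coef_at_1 _ _ _ _ _ solution_pullback_polar_harmonic)..];
    [|intros; apply continuity_pt_const; now intros ? ?
     |apply (periodic_mode_continuous _ _ _ _ periodic_mode_cos2)].
  fold (fourier_coef F (fun _ => 1) 1).
  rewrite <- (fourier_mode0_at_0 _ _ _ _ _ solution_pullback_polar_harmonic _ _ _ periodic_mode_one).
  rewrite fourier_pullback_one_at_0. change_to_R. field.
Qed.

Lemma bint_moeb_fst_snd : bint (fun z => g (moeb (a, b) z) * (fst z * snd z))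
  = fourier_coef F (fun t => sin (2 * t)) 1 / 2.
Proof.
  rewrite bint_moeb. unfold fourier_coef.
  rewrite (RInt_ext_R _ (fun t => / 2 * (F 1 t * sin (2 * t)) + 0 * (F 1 t * sin (2 * t))))
    by (intros; simpl; rewrite sin_2a; field).
  rewrite RInt_lincomb;
    [unfold Rdiv; ring|apply (ex_fourier_coef_at_1 _ _ _ _ _ solution_pullback_polar_harmonic)..];
    apply (periodic_mode_continuous _ _ _ _ periodic_mode_sin2).
Qed.

Lemma fourier_pullback_cos2_at_1 : pd1 psi (a, b) = 0 -> pd2 psi (a, b) = 0 ->
  fourier_coef F (fun t => cos (2 * t)) 1
  = moeb_scale a b ^ 2 * PI * (pd1 (pd1 psi) (a, b) - pd2 (pd2 psi) (a, b)) / 4.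
Proof.
  intros H1 H2.
  pose proof (fourier_mode2_at_0 _ _ _ _ _ solution_pullback_polar_harmonic _ _ _ periodic_mode_cos2) as E.
  rewrite fourier_pullback_rr_cos2_at_0 in E by assumption. lra.
Qed.

Lemma fourier_pullback_sin2_at_1 : pd1 psi (a, b) = 0 -> pd2 psi (a, b) = 0 ->
  fourier_coef F (fun t => sin (2 * t)) 1
  = moeb_scale a b ^ 2 * PI * (pd2 (pd1 psi) (a, b) + pd1 (pd2 psi) (a, b)) / 4.
Proof.
  intros H1 H2.
  pose proof (fourier_mode2_at_0 _ _ _ _ _ solution_pullback_polar_harmonic _ _ _ periodic_mode_sin2) as E.
  rewrite fourier_pullback_rr_sin2_at_0 in E by assumption. lra.
Qed.

Lemma first_moments_vanish_iff :
  bint (fun z => g (moeb (a, b) z)) = 0 /\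
  bint (fun z => g (moeb (a, b) z) * fst z) = 0 /\
  bint (fun z => g (moeb (a, b) z) * snd z) = 0
  <-> psi (a, b) = 0 /\ pd1 psi (a, b) = 0 /\ pd2 psi (a, b) = 0.
Proof.
  rewrite bint_moeb_mean, bint_moeb_fst, bint_moeb_snd.
  assert (0 < PI * moeb_scale a b)
    by (apply Rmult_lt_0_compat; [exact PI_RGT_0|now apply moeb_scale_pos]).
  pose proof PI_RGT_0.
  split.
  - intros (E0 & E1 & E2).
    split; [|split]; [destruct (Rmult_integral _ _ E0)|destruct (Rmult_integral _ _ E1)
                     |destruct (Rmult_integral _ _ E2)]; lra.
  - intros (-> & -> & ->). lra.
Qed.

Lemma second_moments_vanish_iff :
  psi (a, b) = 0 -> pd1 psi (a, b) = 0 -> pd2 psi (a, b) = 0 ->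
  bint (fun z => g (moeb (a, b) z) * fst z ^ 2) = 0 /\
  bint (fun z => g (moeb (a, b) z) * (fst z * snd z)) = 0
  <-> pd1 (pd1 psi) (a, b) = 0 /\ pd2 (pd1 psi) (a, b) = 0 /\
      pd1 (pd2 psi) (a, b) = 0 /\ pd2 (pd2 psi) (a, b) = 0.
Proof.
  intros P0 G1 G2.
  assert (Hin : in_disk (a, b)) by now apply in_disk_pair.
  assert (Hlap := proj1 (proj2 psi_solves) _ Hin).
  assert (Hsym := C2_disk_schwarz psi (proj1 psi_solves) a b Hin).
  assert (0 < moeb_scale a b ^ 2 * PI)
    by (apply Rmult_lt_0_compat; [apply pow_lt, moeb_scale_pos|apply PI_RGT_0]; assumption).
  rewrite bint_moeb_fst_sq, bint_moeb_fst_snd, fourier_pullback_cos2_at_1,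
    fourier_pullback_sin2_at_1, P0 by assumption.
  split.
  - intros [E3 E4].
    assert (pd1 (pd1 psi) (a, b) - pd2 (pd2 psi) (a, b) = 0).
    { destruct (Rmult_integral (moeb_scale a b ^ 2 * PI)
                  (pd1 (pd1 psi) (a, b) - pd2 (pd2 psi) (a, b))); lra. }
    assert (pd2 (pd1 psi) (a, b) + pd1 (pd2 psi) (a, b) = 0).
    { destruct (Rmult_integral (moeb_scale a b ^ 2 * PI)
                  (pd2 (pd1 psi) (a, b) + pd1 (pd2 psi) (a, b))); lra. }
    repeat split; lra.
  - intros (-> & -> & -> & ->). split; lra.
Qed.

End BoundaryMoments.

Theorem proposition4p3 (phi : nat -> C -> R) (psi : C -> R) (p : C) :
  admissible phi ->
  dirichlet_solution (Phi_a phi) psi ->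
  in_disk p ->
  ( (bint (fun z => Phi_a phi (moeb p z)) = 0 /\
     bint (fun z => Phi_a phi (moeb p z) * fst z) = 0 /\
     bint (fun z => Phi_a phi (moeb p z) * snd z) = 0 /\
     bint (fun z => Phi_a phi (moeb p z) * (fst z) ^ 2) = 0 /\
     bint (fun z => Phi_a phi (moeb p z) * (fst z * snd z)) = 0)
  <->
    (psi p = 0 /\
     (pd1 psi p = 0 /\ pd2 psi p = 0) /\
     (pd1 (pd1 psi) p = 0 /\ pd2 (pd1 psi) p = 0 /\
      pd1 (pd2 psi) p = 0 /\ pd2 (pd2 psi) p = 0)) ).
Proof.
  intros _ Hsol Hin. destruct p as [a b].
  assert (Hp : a ^ 2 + b ^ 2 < 1) by now apply in_disk_pair.
  pose proof (first_moments_vanish_iff _ _ a b Hsol Hp) as First.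
  pose proof (second_moments_vanish_iff _ _ a b Hsol Hp) as Second.
  split.
  - intros (E0 & E1 & E2 & E34).
    destruct (proj1 First (conj E0 (conj E1 E2))) as (P0 & G1 & G2).
    pose proof (proj1 (Second P0 G1 G2) E34). tauto.
  - intros (P0 & [G1 G2] & Hess).
    pose proof (proj2 First (conj P0 (conj G1 G2))).
    pose proof (proj2 (Second P0 G1 G2) Hess). tauto.
Qed.
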